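(* Let $C\subset\mathbb{R}^3$ be a polyhedral convex cap, $Z$ an infinitesimal isometric deformation of $C$ with vertical component $u$, and $p$ a vertex of $C$ in the interior of $C$. For each edge $e$ of the triangulation incident to $p$, the sign of $u(y)-u(p)$ is the same for all points $y\in e\setminus\{p\}$. Then it is impossible that $u(y)-u(p)>0$ on every edge incident to $p$, and it is impossible that $u(y)-u(p)<0$ on every edge incident to $p$ (the link of $C$ at $p$ can neither go up nor go down).
   Context: A polyhedral convex cap is a convex polyhedral surface $C$ in $\mathbb{R}^3$ (boundary of a locally finite intersection of half-spaces), with boundary $\partial C$, homeomorphic to the closed disc, such that $\partial C$ lies in the horizontal plane and the orthogonal projection onto this plane is a bijection between $C$ and the domain bounded by $\partial C$; it may have infinitely many vertices accumulating at $\partial C$. An infinitesimal isometric deformation of $C$ consists of a triangulation of the faces of $C$ with no new vertices and a Killing field of $\mathbb{R}^3$ on each triangle, Killing fields of adjacent triangles coinciding on the common edge; it yields a continuous vector field $Z$ on the interior of $C$, and $u$ denotes its vertical component. The link of $C$ at $p$ is the spherical polygon obtained by intersecting the triangulated $C$ with a small sphere centred at $p$ and rescaling to the unit sphere; a vertex of the link goes up (resp. down) if $u-u(p)$ is positive (resp. negative) on the corresponding edge. *)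

From Stdlib Require Import Reals List.
Open Scope R_scope.

Record vec := V { vx : R; vy : R; vz : R }.
Definition vadd (a b : vec) : vec := V (vx a + vx b) (vy a + vy b) (vz a + vz b).
Definition vsub (a b : vec) : vec := V (vx a - vx b) (vy a - vy b) (vz a - vz b).
Definition vscal (t : R) (a : vec) : vec := V (t * vx a) (t * vy a) (t * vz a).
Definition cross (a b : vec) : vec :=
  V (vy a * vz b - vz a * vy b) (vz a * vx b - vx a * vz b) (vx a * vy b - vy a * vx b).
Definition vzero : vec := V 0 0 0.
Definition dist2 (a b : vec) : R := (vx a - vx b)^2 + (vy a - vy b)^2 + (vz a - vz b)^2.

Definition pdist2 (x y x' y' : R) : R := (x - x')^2 + (y - y')^2.
Definition interior2 (D : R -> R -> Prop) (x y : R) : Prop :=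
  exists e, 0 < e /\ forall x' y', pdist2 x' y' x y < e -> D x' y'.
Definition convex2 (D : R -> R -> Prop) : Prop :=
  forall x1 y1 x2 y2 t, D x1 y1 -> D x2 y2 -> 0 <= t <= 1 ->
    D ((1 - t) * x1 + t * x2) ((1 - t) * y1 + t * y2).
Definition bounded2 (D : R -> R -> Prop) : Prop :=
  exists M, forall x y, D x y -> x^2 + y^2 <= M.
Definition closed2 (D : R -> R -> Prop) : Prop :=
  forall x y, (forall e, 0 < e -> exists x' y', D x' y' /\ pdist2 x' y' x y < e) -> D x y.
Definition concave_on (D : R -> R -> Prop) (g : R -> R -> R) : Prop :=
  forall x1 y1 x2 y2 t, D x1 y1 -> D x2 y2 -> 0 <= t <= 1 ->
    (1 - t) * g x1 y1 + t * g x2 y2 <= g ((1 - t) * x1 + t * x2) ((1 - t) * y1 + t * y2).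
Definition cont_on (D : R -> R -> Prop) (g : R -> R -> R) : Prop :=
  forall x y, D x y -> forall e, 0 < e -> exists d, 0 < d /\
    forall x' y', D x' y' -> pdist2 x' y' x y < d -> Rabs (g x' y' - g x y) < e.

Definition aff (abc : R * R * R) (x y : R) : R :=
  let '(a, b, c) := abc in a * x + b * y + c.
Definition min_aff (h0 : R * R * R) (l : list (R * R * R)) (x y : R) : R :=
  fold_right (fun abc m => Rmin (aff abc x y) m) (aff h0 x y) l.

(** locally (near every interior point of D) g is the minimum of finitely many
    affine functions: locally finite intersection of half-spaces *)
Definition locally_polyhedral (D : R -> R -> Prop) (g : R -> R -> R) : Prop :=
  forall x y, interior2 D x y -> exists e h0 l, 0 < e /\
    forall x' y', pdist2 x' y' x y < e -> g x' y' = min_aff h0 l x' y'.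

(** C = { (x, y, f x y) | D x y }: the projection to the horizontal plane is a
    bijection onto the compact convex domain D (with nonempty interior, hence a
    closed disc); f is continuous, constant (= h) on the boundary of D
    (boundary of C in a horizontal plane), and, for s = 1 or s = -1 (cap
    above or below its boundary plane), s * f is concave and locally the
    minimum of finitely many affine functions. *)
Definition polyhedral_convex_cap (D : R -> R -> Prop) (f : R -> R -> R) : Prop :=
  convex2 D /\ bounded2 D /\ closed2 D /\ (exists x y, interior2 D x y) /\
  cont_on D f /\
  (exists h, forall x y, D x y -> ~ interior2 D x y -> f x y = h) /\
  exists s, (s = 1 \/ s = -1) /\
    concave_on D (fun x y => s * f x y) /\
    locally_polyhedral D (fun x y => s * f x y).

Definition inC (D : R -> R -> Prop) (f : R -> R -> R) (p : vec) : Prop :=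
  D (vx p) (vy p) /\ vz p = f (vx p) (vy p).
Definition inC_int (D : R -> R -> Prop) (f : R -> R -> R) (p : vec) : Prop :=
  interior2 D (vx p) (vy p) /\ vz p = f (vx p) (vy p).

(** p is a vertex of C lying in the interior of C: C is not, near p, affine
    along any horizontal direction v (i.e. p is neither in the relative
    interior of a face nor of an edge of C). *)
Definition is_vertexC (D : R -> R -> Prop) (f : R -> R -> R) (p : vec) : Prop :=
  inC_int D f p /\
  ~ (exists v1 v2 c e, (v1 <> 0 \/ v2 <> 0) /\ 0 < e /\
       forall x y t, pdist2 x y (vx p) (vy p) < e ->
         pdist2 (x + t * v1) (y + t * v2) (vx p) (vy p) < e ->
         f (x + t * v1) (y + t * v2) = f x y + t * c).

Definition tri := (vec * vec * vec)%type.
Definition in_tri (T : tri) (x : vec) : Prop :=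
  let '(a, b, c) := T in
  exists l1 l2 l3, 0 <= l1 /\ 0 <= l2 /\ 0 <= l3 /\ l1 + l2 + l3 = 1 /\
    x = vadd (vscal l1 a) (vadd (vscal l2 b) (vscal l3 c)).
Definition is_vert (T : tri) (v : vec) : Prop :=
  let '(a, b, c) := T in v = a \/ v = b \/ v = c.
Definition nondegenerate (T : tri) : Prop :=
  let '(a, b, c) := T in cross (vsub b a) (vsub c a) <> vzero.

(** intersection of T with T' is the convex hull of their common vertices *)
Definition meets_in_common_face (T T' : tri) : Prop :=
  forall x, in_tri T x -> in_tri T' x ->
  let '(a, b, c) := T in
  exists l1 l2 l3, 0 <= l1 /\ 0 <= l2 /\ 0 <= l3 /\ l1 + l2 + l3 = 1 /\
    x = vadd (vscal l1 a) (vadd (vscal l2 b) (vscal l3 c)) /\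
    (0 < l1 -> is_vert T' a) /\ (0 < l2 -> is_vert T' b) /\ (0 < l3 -> is_vert T' c).

(** A triangulation of the faces of C with no new vertices, indexed by I:
    nondegenerate triangles contained in C, covering the interior of C,
    locally finite in the interior of C, pairwise distinct and meeting
    edge-to-edge; their vertices in the interior of C are vertices of C. *)
Definition triangulation (D : R -> R -> Prop) (f : R -> R -> R) (I : Type) (T : I -> tri) : Prop :=
  (forall i, nondegenerate (T i)) /\
  (forall i x, in_tri (T i) x -> inC D f x) /\
  (forall p, inC_int D f p -> exists i, in_tri (T i) p) /\
  (forall p, inC_int D f p -> exists e (l : list I), 0 < e /\
     forall i, (exists x, in_tri (T i) x /\ dist2 x p < e) -> In i l) /\
  (forall i j, i <> j -> exists v, is_vert (T i) v /\ ~ is_vert (T j) v) /\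
  (forall i j, i <> j -> meets_in_common_face (T i) (T j)) /\
  (forall i v, is_vert (T i) v -> inC_int D f v -> is_vertexC D f v).

Record killing := Killing { ktr : vec; krot : vec }.
Definition kapp (k : killing) (x : vec) : vec := vadd (ktr k) (cross (krot k) x).

Definition seg (v w : vec) (t : R) : vec := vadd v (vscal t (vsub w v)).

(** An infinitesimal isometric deformation of C: a triangulation T, a Killing
    field K i on each triangle, Killing fields of triangles sharing an edge
    coinciding on that edge; Z is the resulting vector field on the interior
    of C. *)
Definition inf_isometric_deformation (D : R -> R -> Prop) (f : R -> R -> R)
    (I : Type) (T : I -> tri) (K : I -> killing) (Z : vec -> vec) : Prop :=
  triangulation D f I T /\
  (forall i j v w, v <> w -> is_vert (T i) v -> is_vert (T i) w ->
     is_vert (T j) v -> is_vert (T j) w ->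
     forall t, 0 <= t <= 1 -> kapp (K i) (seg v w t) = kapp (K j) (seg v w t)) /\
  (forall i x, in_tri (T i) x -> inC_int D f x -> Z x = kapp (K i) x).

Definition incident_edge (I : Type) (T : I -> tri) (p q : vec) : Prop :=
  exists i, is_vert (T i) p /\ is_vert (T i) q /\ q <> p.

Definition on_edge_minus_p (p q y : vec) : Prop :=
  exists t, 0 < t <= 1 /\ y = seg p q t.

From Stdlib Require Import Reals Lra Nsatz List Classical ClassicalEpsilon.
Open Scope R_scope.

(* Near the interior vertex p, the cap is the graph of a function f which is
   affine, of slope g_i, on each triangle T_i of the triangulation around p, and
   Z is given on T_i by a Killing field with rotation vector b_i. The vertical
   variation of Z from p is then the linear form (b_i x (X - p))_z, so if every
   edge from p goes up (or every edge goes down), this form has a fixed sign on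
   every triangle around p. Across an edge E shared by T_i and T_j, b_i - b_j is
   parallel to E, and the quantity b_i . (-g_i, 1) jumps by the slope jump times
   a multiple of (b_j x E)_z, while convexity of the cap fixes the sign of the
   slope jump. Hence, along a small loop around p, this quantity is
   nonincreasing, and strictly decreasing wherever the slope changes. Coming back
   to its initial value, it never jumps, so all slopes agree: f is affine near p,
   and p is not a vertex of C. Beforehand, one checks that p, being a vertex of
   C, is a vertex of every triangle containing it. *)

(** * Triangles and affine functions in the plane *)

Lemma vec_ext (a b : vec) : vx a = vx b -> vy a = vy b -> vz a = vz b -> a = b.
Proof. destruct a, b; simpl; intros -> -> ->; reflexivity. Qed.

Definition area2 (t : tri) : R :=
  let '(a, b, c) := t in (vx b - vx a) * (vy c - vy a) - (vy b - vy a) * (vx c - vx a).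
(* Barycentric coordinates in the projection of t (junk when area2 t = 0). *)
Definition bary1 (t : tri) (x y : R) : R :=
  let '(a, b, c) := t in ((vx b - x) * (vy c - y) - (vy b - y) * (vx c - x)) / area2 t.
Definition bary2 (t : tri) (x y : R) : R :=
  let '(a, b, c) := t in ((vx c - x) * (vy a - y) - (vy c - y) * (vx a - x)) / area2 t.
Definition bary3 (t : tri) (x y : R) : R :=
  let '(a, b, c) := t in ((vx a - x) * (vy b - y) - (vy a - y) * (vx b - x)) / area2 t.

Definition tri_height (t : tri) (x y : R) : R :=
  let '(a, b, c) := t in bary1 t x y * vz a + bary2 t x y * vz b + bary3 t x y * vz c.

Definition tri_slope_x (t : tri) : R :=
  let '(a, b, c) := t in
  ((vy b - vy c) * vz a + (vy c - vy a) * vz b + (vy a - vy b) * vz c) / area2 t.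
Definition tri_slope_y (t : tri) : R :=
  let '(a, b, c) := t in
  ((vx c - vx b) * vz a + (vx a - vx c) * vz b + (vx b - vx a) * vz c) / area2 t.

Definition in_proj (t : tri) (x y : R) : Prop := exists X, in_tri t X /\ vx X = x /\ vy X = y.

Definition affine2 (F : R -> R -> R) (cx cy : R) : Prop :=
  forall x y x0 y0, F x y = F x0 y0 + (x - x0) * cx + (y - y0) * cy.

Ltac unfold_tri := cbn [area2 bary1 bary2 bary3 tri_height] in *.

Lemma bary1_affine t : exists cx cy, affine2 (bary1 t) cx cy.
Proof.
  destruct t as [[a b] c]; exists ((vy b - vy c) / area2 (a, b, c)), ((vx c - vx b) / area2 (a, b, c)).
  intros x y x0 y0; unfold_tri; unfold Rdiv; ring.
Qed.
Lemma bary2_affine t : exists cx cy, affine2 (bary2 t) cx cy.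
Proof.
  destruct t as [[a b] c]; exists ((vy c - vy a) / area2 (a, b, c)), ((vx a - vx c) / area2 (a, b, c)).
  intros x y x0 y0; unfold_tri; unfold Rdiv; ring.
Qed.
Lemma bary3_affine t : exists cx cy, affine2 (bary3 t) cx cy.
Proof.
  destruct t as [[a b] c]; exists ((vy a - vy b) / area2 (a, b, c)), ((vx b - vx a) / area2 (a, b, c)).
  intros x y x0 y0; unfold_tri; unfold Rdiv; ring.
Qed.

Lemma tri_height_affine t : affine2 (tri_height t) (tri_slope_x t) (tri_slope_y t).
Proof.
  destruct t as [[a b] c]; intros x y x0 y0.
  cbn [tri_slope_x tri_slope_y]; unfold_tri; unfold Rdiv; ring.
Qed.

Lemma in_tri_coords a b c X : in_tri (a, b, c) X -> exists l1 l2 l3,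
  0 <= l1 /\ 0 <= l2 /\ 0 <= l3 /\ l1 + l2 + l3 = 1 /\
  vx X = l1 * vx a + l2 * vx b + l3 * vx c /\
  vy X = l1 * vy a + l2 * vy b + l3 * vy c /\
  vz X = l1 * vz a + l2 * vz b + l3 * vz c.
Proof.
  intros (l1 & l2 & l3 & H1 & H2 & H3 & H4 & ->).
  exists l1, l2, l3; simpl; repeat split; lra.
Qed.

Lemma in_tri_of_coords a b c l1 l2 l3 X :
  0 <= l1 -> 0 <= l2 -> 0 <= l3 -> l1 + l2 + l3 = 1 ->
  vx X = l1 * vx a + l2 * vx b + l3 * vx c ->
  vy X = l1 * vy a + l2 * vy b + l3 * vy c ->
  vz X = l1 * vz a + l2 * vz b + l3 * vz c -> in_tri (a, b, c) X.
Proof. intros. exists l1, l2, l3; repeat split; auto. apply vec_ext; simpl; lra. Qed.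

Lemma vert_in_tri t v : is_vert t v -> in_tri t v.
Proof.
  destruct t as [[a b] c]. intros [ -> | [ -> | -> ]].
  - apply in_tri_of_coords with 1 0 0; lra.
  - apply in_tri_of_coords with 0 1 0; lra.
  - apply in_tri_of_coords with 0 0 1; lra.
Qed.

Lemma seg_in_tri t u v tau : is_vert t u -> is_vert t v -> 0 <= tau <= 1 -> in_tri t (seg u v tau).
Proof.
  destruct t as [[a b] c]. unfold seg. intros Hu Hv Ht.
  destruct Hu as [ -> | [ -> | -> ]]; destruct Hv as [ -> | [ -> | -> ]].
  all: first
   [ apply in_tri_of_coords with 1 0 0; simpl; lra
   | apply in_tri_of_coords with (1 - tau) tau 0; simpl; lra
   | apply in_tri_of_coords with (1 - tau) 0 tau; simpl; lra
   | apply in_tri_of_coords with tau (1 - tau) 0; simpl; lra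
   | apply in_tri_of_coords with 0 1 0; simpl; lra
   | apply in_tri_of_coords with 0 (1 - tau) tau; simpl; lra
   | apply in_tri_of_coords with tau 0 (1 - tau); simpl; lra
   | apply in_tri_of_coords with 0 tau (1 - tau); simpl; lra
   | apply in_tri_of_coords with 0 0 1; simpl; lra ].
Qed.

Lemma area2_vert_neq a b c : area2 (a, b, c) <> 0 -> a <> b /\ a <> c /\ b <> c.
Proof. intros H; unfold_tri; repeat split; intros ->; apply H; ring. Qed.

Lemma bary_of_comb a b c l1 l2 l3 : area2 (a, b, c) <> 0 -> l1 + l2 + l3 = 1 ->
  let x := l1 * vx a + l2 * vx b + l3 * vx c in
  let y := l1 * vy a + l2 * vy b + l3 * vy c in
  bary1 (a, b, c) x y = l1 /\ bary2 (a, b, c) x y = l2 /\ bary3 (a, b, c) x y = l3.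
Proof.
  intros Hd Hs x y; unfold x, y; unfold_tri.
  replace l1 with (1 - l2 - l3) by lra. repeat split; field; exact Hd.
Qed.

Lemma bary_at_vertices a b c : area2 (a, b, c) <> 0 ->
  bary1 (a, b, c) (vx a) (vy a) = 1 /\ bary1 (a, b, c) (vx b) (vy b) = 0 /\
  bary1 (a, b, c) (vx c) (vy c) = 0 /\ bary2 (a, b, c) (vx a) (vy a) = 0 /\
  bary2 (a, b, c) (vx b) (vy b) = 1 /\ bary2 (a, b, c) (vx c) (vy c) = 0 /\
  bary3 (a, b, c) (vx a) (vy a) = 0 /\ bary3 (a, b, c) (vx b) (vy b) = 0 /\
  bary3 (a, b, c) (vx c) (vy c) = 1.
Proof. intros Hd; unfold_tri; repeat split; field; exact Hd. Qed.

Lemma in_proj_iff_bary t x y : area2 t <> 0 ->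
  in_proj t x y <-> 0 <= bary1 t x y /\ 0 <= bary2 t x y /\ 0 <= bary3 t x y.
Proof.
  destruct t as [[a b] c]; intros Hd; split.
  - intros (X & HX & <- & <-).
    destruct (in_tri_coords _ _ _ _ HX) as (l1 & l2 & l3 & H1 & H2 & H3 & Hs & -> & -> & _).
    destruct (bary_of_comb a b c l1 l2 l3 Hd Hs) as (-> & -> & ->); auto.
  - intros (H1 & H2 & H3).
    exists (V x y (tri_height (a, b, c) x y)); repeat split; auto.
    apply in_tri_of_coords with (bary1 (a, b, c) x y) (bary2 (a, b, c) x y) (bary3 (a, b, c) x y);
      auto; simpl; unfold_tri; field; exact Hd.
Qed.

Lemma in_tri_height t X : area2 t <> 0 -> in_tri t X -> vz X = tri_height t (vx X) (vy X).
Proof.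
  destruct t as [[a b] c]; intros Hd HX.
  destruct (in_tri_coords _ _ _ _ HX) as (l1 & l2 & l3 & _ & _ & _ & Hs & -> & -> & ->).
  destruct (bary_of_comb a b c l1 l2 l3 Hd Hs) as (E1 & E2 & E3).
  cbn [tri_height]. rewrite E1, E2, E3; reflexivity.
Qed.

Lemma tri_height_vert t v : area2 t <> 0 -> is_vert t v -> tri_height t (vx v) (vy v) = vz v.
Proof.
  destruct t as [[a b] c]; intros Hd Hv.
  rewrite <- (in_tri_height _ v Hd (vert_in_tri _ _ Hv)); reflexivity.
Qed.

Lemma area2_proj_neq a b c : area2 (a, b, c) <> 0 ->
  (vx a <> vx b \/ vy a <> vy b) /\ (vx a <> vx c \/ vy a <> vy c) /\ (vx b <> vx c \/ vy b <> vy c).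
Proof.
  intros Hd.
  assert (G : forall u w, (u = a /\ w = b \/ u = a /\ w = c \/ u = b /\ w = c) ->
            vx u <> vx w \/ vy u <> vy w).
  { intros u w Huw. destruct (Req_dec (vx u) (vx w)) as [Ex|]; [|left; assumption].
    destruct (Req_dec (vy u) (vy w)) as [Ey|]; [|right; assumption].
    exfalso. apply Hd. unfold_tri.
    destruct Huw as [[-> ->]|[[-> ->]|[-> ->]]]; rewrite Ex, Ey; ring. }
  repeat split; apply G; tauto.
Qed.

Lemma in_tri_from_vertex t v X : area2 t <> 0 -> is_vert t v -> in_tri t X ->
  exists q1 q2 m1 m2, is_vert t q1 /\ is_vert t q2 /\ q1 <> v /\ q2 <> v /\ 0 <= m1 /\ 0 <= m2 /\
    vx X - vx v = m1 * (vx q1 - vx v) + m2 * (vx q2 - vx v) /\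
    vy X - vy v = m1 * (vy q1 - vy v) + m2 * (vy q2 - vy v).
Proof.
  destruct t as [[a b] c]. intros Hd Hv HX.
  destruct (area2_vert_neq a b c Hd) as (Hab & Hac & Hbc).
  destruct (in_tri_coords _ _ _ _ HX) as (l1 & l2 & l3 & H1 & H2 & H3 & Hs & -> & -> & _).
  destruct Hv as [ -> | [ -> | -> ]].
  - exists b, c, l2, l3. cbn. repeat split; auto; try (replace l1 with (1 - l2 - l3) by lra; ring).
  - exists a, c, l1, l3. cbn. repeat split; auto; try (replace l2 with (1 - l1 - l3) by lra; ring).
  - exists a, b, l1, l2. cbn. repeat split; auto; try (replace l3 with (1 - l1 - l2) by lra; ring).
Qed.

Lemma Rmult_abs_bounds e l : 0 <= e -> - (e * Rabs l) <= e * l <= e * Rabs l.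
Proof.
  intros He. replace (e * Rabs l) with (Rabs (e * l)) by (rewrite Rabs_mult, Rabs_pos_eq; lra).
  pose proof (Rle_abs (e * l)); pose proof (Rle_abs (- (e * l))); rewrite Rabs_Ropp in *; lra.
Qed.

Lemma affine2_comb F cx cy m1 m2 m3 x1 y1 x2 y2 x3 y3 : affine2 F cx cy -> m1 + m2 + m3 = 1 ->
  F (m1 * x1 + m2 * x2 + m3 * x3) (m1 * y1 + m2 * y2 + m3 * y3) =
  m1 * F x1 y1 + m2 * F x2 y2 + m3 * F x3 y3.
Proof.
  intros H Hs. rewrite (H _ _ 0 0), (H x1 y1 0 0), (H x2 y2 0 0), (H x3 y3 0 0).
  replace m1 with (1 - m2 - m3) by lra. ring.
Qed.

Lemma affine2_line F cx cy x0 y0 v1 v2 s s' : affine2 F cx cy ->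
  F (x0 + s' * v1) (y0 + s' * v2) = F (x0 + s * v1) (y0 + s * v2) + (s' - s) * (cx * v1 + cy * v2).
Proof. intros H. rewrite (H _ _ (x0 + s * v1) (y0 + s * v2)). ring. Qed.

Lemma affine2_neg_near F cx cy x0 y0 : affine2 F cx cy -> F x0 y0 < 0 ->
  exists r, 0 < r /\ forall x y, pdist2 x y x0 y0 < r -> F x y < 0.
Proof.
  intros H Hn. set (m := F x0 y0) in *. set (k := cx * cx + cy * cy + 1).
  assert (Hk : 0 < k) by (unfold k; nra).
  exists (m * m / k). split; [apply Rdiv_lt_0_compat; nra|].
  intros x y Hp. unfold pdist2 in Hp. rewrite (H x y x0 y0). fold m.
  set (L := (x - x0) * cx + (y - y0) * cy).
  replace (m + (x - x0) * cx + (y - y0) * cy) with (m + L) by (unfold L; ring).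
  set (d := (x - x0) * (x - x0) + (y - y0) * (y - y0)).
  assert (HL : L * L <= (k - 1) * d).
  { assert (E : (k - 1) * d - L * L = ((x - x0) * cy - (y - y0) * cx) ^ 2) by (unfold k, d, L; ring).
    pose proof (pow2_ge_0 ((x - x0) * cy - (y - y0) * cx)); lra. }
  assert (Hd : d * k < m * m).
  { replace d with ((x - x0) ^ 2 + (y - y0) ^ 2) by (unfold d; ring).
    apply (Rmult_lt_compat_r k) in Hp; [|exact Hk].
    unfold Rdiv in Hp; rewrite Rmult_assoc, Rinv_l, Rmult_1_r in Hp; lra. }
  assert (Hd0 : 0 <= d) by (unfold d; apply Rplus_le_le_0_compat; apply Rle_0_sqr).
  assert (HLm : L * L < m * m) by (clear - HL Hd Hd0; lra).
  destruct (Rlt_or_le (m + L) 0) as [Hlt|Hge]; [lra|].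
  assert (0 <= (m + L) * (L - m)) by (apply Rmult_le_pos; lra). nra.
Qed.

Lemma affine2_pos_near F cx cy x0 y0 : affine2 F cx cy -> 0 < F x0 y0 ->
  exists r, 0 < r /\ forall x y, pdist2 x y x0 y0 < r -> 0 < F x y.
Proof.
  intros H Hp.
  destruct (affine2_neg_near (fun x y => - F x y) (- cx) (- cy) x0 y0) as (r & Hr & Hneg).
  - intros x y x1 y1. rewrite (H x y x1 y1). ring.
  - lra.
  - exists r; split; auto. intros x y Hxy. specialize (Hneg x y Hxy). simpl in Hneg. lra.
Qed.

Lemma affine1_neg_right (g : R -> R) k s : (forall s', g s' = g s + (s' - s) * k) -> g s < 0 ->
  exists e, 0 < e /\ forall s', s < s' < s + e -> g s' < 0.
Proof.
  intros Hg Hn. pose proof (Rabs_pos k). exists (- g s / (Rabs k + 1)).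
  split; [apply Rdiv_lt_0_compat; lra|]. intros s' [Hs1 Hs2]. rewrite Hg.
  assert ((s' - s) * k <= (s' - s) * Rabs k) by (apply Rmult_le_compat_l; [lra| apply Rle_abs]).
  assert ((s' - s) * (Rabs k + 1) < - g s).
  { apply (Rmult_lt_compat_r (Rabs k + 1)) in Hs2; [|lra].
    replace ((s + - g s / (Rabs k + 1)) * (Rabs k + 1)) with (s * (Rabs k + 1) - g s) in Hs2
      by (field; lra). nra. }
  nra.
Qed.

Lemma affine1_nonneg_between (g : R -> R) k s s1 : (forall s', g s' = g s + (s' - s) * k) ->
  0 <= g s -> 0 <= g s1 -> forall s', s <= s' <= s1 -> 0 <= g s'.
Proof.
  intros Hg H0 H1 s' Hs. rewrite Hg. rewrite Hg in H1.
  destruct (Rle_or_lt 0 k).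
  - assert (0 <= (s' - s) * k) by (apply Rmult_le_pos; lra). lra.
  - assert (0 <= (s1 - s') * (- k)) by (apply Rmult_le_pos; lra). nra.
Qed.

Lemma pdist2_nonneg x y a b : 0 <= pdist2 x y a b.
Proof. unfold pdist2. pose proof (pow2_ge_0 (x - a)); pose proof (pow2_ge_0 (y - b)); lra. Qed.

Lemma pdist2_triangle x y a b c d : pdist2 x y a b <= 2 * pdist2 x y c d + 2 * pdist2 c d a b.
Proof.
  unfold pdist2.
  pose proof (pow2_ge_0 (x - c - (c - a))); pose proof (pow2_ge_0 (y - d - (d - b))).
  nra.
Qed.

Lemma interior2_open D x0 y0 : interior2 D x0 y0 ->
  exists r, 0 < r /\ forall x y, pdist2 x y x0 y0 < r -> interior2 D x y.
Proof.
  intros (e & He & H). exists (e / 4); split; [lra|].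
  intros x y Hxy. exists (e / 4); split; [lra|]. intros x' y' H'.
  apply H. pose proof (pdist2_triangle x' y' x0 y0 x y). lra.
Qed.

Lemma interior2_in D x y : interior2 D x y -> D x y.
Proof.
  intros (e & He & H). apply H. unfold pdist2.
  replace (x - x) with 0 by ring. replace (y - y) with 0 by ring. lra.
Qed.

Lemma pdist2_segment x y v1 v2 x0 y0 t r s : 0 <= s <= t ->
  pdist2 x y x0 y0 < r -> pdist2 (x + t * v1) (y + t * v2) x0 y0 < r ->
  pdist2 (x + s * v1) (y + s * v2) x0 y0 < r.
Proof.
  intros Hs H0 H1. unfold pdist2 in *.
  set (q u := (x + u * v1 - x0) ^ 2 + (y + u * v2 - y0) ^ 2) in *.
  change (q s < r). change (q t < r) in H1.
  replace ((x - x0) ^ 2 + (y - y0) ^ 2) with (q 0) in H0 by (unfold q; ring).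
  assert (Hconv : t * q s = (t - s) * q 0 + s * q t - s * t * (t - s) * (v1 * v1 + v2 * v2))
    by (unfold q; ring).
  assert (0 <= s * t * (t - s) * (v1 * v1 + v2 * v2)).
  { apply Rmult_le_pos; [apply Rmult_le_pos; [apply Rmult_le_pos|]|]; try lra. nra. }
  destruct (Req_dec t 0) as [Ht|Ht].
  - replace s with 0 by lra. exact H0.
  - assert (0 < t) by lra.
    assert ((t - s) * q 0 <= (t - s) * r) by (apply Rmult_le_compat_l; lra).
    assert (s * q t <= s * r) by (apply Rmult_le_compat_l; lra).
    assert (t * q s < t * r).
    { destruct (Req_dec s 0) as [->|Hs0]; [nra|].
      assert (s * q t < s * r) by (apply Rmult_lt_compat_l; lra). lra. }
    nra.
Qed.

Lemma small_scale N r : 0 <= N -> 0 < r -> exists tau, 0 < tau <= 1 /\ tau * tau * N < r.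
Proof.
  intros HN Hr. assert (Hq : 0 < r / (N + 1)) by (apply Rdiv_lt_0_compat; lra).
  exists (Rmin 1 (r / (N + 1))). set (t := Rmin 1 (r / (N + 1))).
  assert (t <= 1) by apply Rmin_l. assert (t <= r / (N + 1)) by apply Rmin_r.
  assert (0 < t) by (apply Rmin_glb_lt; lra).
  assert (0 <= t * N) by (apply Rmult_le_pos; lra).
  assert (t * (t * N) <= 1 * (t * N)) by (apply Rmult_le_compat_r; lra).
  assert (t * N <= r / (N + 1) * N) by (apply Rmult_le_compat_r; lra).
  assert (r / (N + 1) * N = r - r / (N + 1)) by (field; lra).
  split; lra.
Qed.

Lemma in_proj_convex t x1 y1 x2 y2 th : area2 t <> 0 -> 0 <= th <= 1 ->
  in_proj t x1 y1 -> in_proj t x2 y2 ->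
  in_proj t ((1 - th) * x1 + th * x2) ((1 - th) * y1 + th * y2).
Proof.
  intros Hd Hth H1 H2.
  apply (in_proj_iff_bary _ _ _ Hd) in H1, H2. apply (in_proj_iff_bary _ _ _ Hd).
  assert (G : forall F cx cy, affine2 F cx cy -> 0 <= F x1 y1 -> 0 <= F x2 y2 ->
     0 <= F ((1 - th) * x1 + th * x2) ((1 - th) * y1 + th * y2)).
  { intros F cx cy HF A B.
    pose proof (affine2_comb F cx cy (1 - th) th 0 x1 y1 x2 y2 0 0 HF ltac:(ring)) as E.
    rewrite !Rmult_0_l, !Rplus_0_r in E. rewrite E. nra. }
  destruct (bary1_affine t) as (c1 & d1 & A1), (bary2_affine t) as (c2 & d2 & A2),
    (bary3_affine t) as (c3 & d3 & A3).
  repeat split; [apply (G _ _ _ A1)| apply (G _ _ _ A2)| apply (G _ _ _ A3)]; tauto.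
Qed.

Lemma not_in_proj_near t x0 y0 : area2 t <> 0 -> ~ in_proj t x0 y0 ->
  exists r, 0 < r /\ forall x y, pdist2 x y x0 y0 < r -> ~ in_proj t x y.
Proof.
  intros Hd Hn. rewrite (in_proj_iff_bary _ _ _ Hd) in Hn.
  assert (Hneg : exists F cx cy, affine2 F cx cy /\ F x0 y0 < 0 /\
            forall x y, in_proj t x y -> 0 <= F x y).
  { destruct (bary1_affine t) as (c1 & d1 & A1), (bary2_affine t) as (c2 & d2 & A2),
      (bary3_affine t) as (c3 & d3 & A3).
    destruct (Rlt_or_le (bary1 t x0 y0) 0); [exists (bary1 t), c1, d1|].
    2: destruct (Rlt_or_le (bary2 t x0 y0) 0); [exists (bary2 t), c2, d2|].
    3: destruct (Rlt_or_le (bary3 t x0 y0) 0); [exists (bary3 t), c3, d3| tauto].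
    all: repeat split; auto; intros x y Hxy; apply (in_proj_iff_bary _ _ _ Hd) in Hxy; tauto. }
  destruct Hneg as (F & cx & cy & HF & Hlt & Hpos).
  destruct (affine2_neg_near F cx cy x0 y0 HF Hlt) as (r & Hr & Hnear).
  exists r; split; auto. intros x y Hxy Hin.
  specialize (Hnear x y Hxy). specialize (Hpos x y Hin). lra.
Qed.

Lemma in_proj_extend_through_center t x y : area2 t <> 0 -> exists x0 y0 e, 0 < e /\
  in_proj t x0 y0 /\ in_proj t ((1 + e) * x0 - e * x) ((1 + e) * y0 - e * y).
Proof.
  destruct t as [[a b] c]. intros Hd.
  set (x0 := 1/3 * vx a + 1/3 * vx b + 1/3 * vx c).
  set (y0 := 1/3 * vy a + 1/3 * vy b + 1/3 * vy c).
  destruct (bary_of_comb a b c (1/3) (1/3) (1/3) Hd ltac:(lra)) as (C1 & C2 & C3).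
  fold x0 y0 in C1, C2, C3.
  set (l1 := bary1 (a, b, c) x y). set (l2 := bary2 (a, b, c) x y). set (l3 := bary3 (a, b, c) x y).
  pose proof (Rabs_pos l1); pose proof (Rabs_pos l2); pose proof (Rabs_pos l3).
  set (e := 1 / (3 * (Rabs l1 + Rabs l2 + Rabs l3 + 1))).
  assert (He : 0 < e) by (unfold e; apply Rdiv_lt_0_compat; lra).
  assert (He3 : e * Rabs l1 + e * Rabs l2 + e * Rabs l3 + e = 1 / 3) by (unfold e; field; lra).
  pose proof (Rmult_abs_bounds e l1 ltac:(lra)); pose proof (Rmult_abs_bounds e l2 ltac:(lra));
    pose proof (Rmult_abs_bounds e l3 ltac:(lra)).
  assert (Hw : forall F cx cy, affine2 F cx cy ->
            F ((1 + e) * x0 - e * x) ((1 + e) * y0 - e * y) = (1 + e) * F x0 y0 - e * F x y).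
  { intros F cx cy HF.
    replace ((1 + e) * x0 - e * x) with ((1 + e) * x0 + - e * x + 0 * 0) by ring.
    replace ((1 + e) * y0 - e * y) with ((1 + e) * y0 + - e * y + 0 * 0) by ring.
    rewrite (affine2_comb F cx cy _ _ _ _ _ _ _ _ _ HF); ring. }
  destruct (bary1_affine (a, b, c)) as (c1 & d1 & A1), (bary2_affine (a, b, c)) as (c2 & d2 & A2),
    (bary3_affine (a, b, c)) as (c3 & d3 & A3).
  exists x0, y0, e. split; [exact He|]. split; apply (in_proj_iff_bary _ _ _ Hd).
  - rewrite C1, C2, C3. lra.
  - rewrite (Hw _ _ _ A1), (Hw _ _ _ A2), (Hw _ _ _ A3), C1, C2, C3. fold l1 l2 l3. lra.
Qed.

(** * From local to global on an interval *)

Section LocalToGlobal.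
Variables (h : R -> R) (a b : R).
Hypothesis Hright : forall t, a <= t < b ->
  exists d, 0 < d /\ forall s, t < s < t + d -> s <= b -> h s <= h t.
Hypothesis Hleft : forall t, a < t <= b ->
  exists d, 0 < d /\ forall s, t - d < s < t -> a <= s -> h t <= h s.

(* The supremum m of the points up to which h stays below h x can be neither
   left of y nor a point where h exceeds h x. *)
Lemma nonincreasing_on_of_local x y : a <= x -> x <= y -> y <= b -> h y <= h x.
Proof.
  intros Hax Hxy Hyb.
  set (E z := x <= z <= y /\ forall w, x <= w <= z -> h w <= h x).
  assert (HEx : E x) by (split; [lra| intros w Hw; replace w with x by lra; lra]).
  destruct (completeness E) as [m [Hub Hlub]]; [exists y; intros z [Hz _]; lra| exists x; exact HEx|].
  assert (Hxm : x <= m) by (apply Hub, HEx).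
  assert (Hmy : m <= y) by (apply Hlub; intros z [Hz _]; lra).
  assert (Hbelow : forall w, x <= w < m -> h w <= h x).
  { intros w Hw. destruct (classic (exists z, E z /\ w < z)) as [(z & [_ Hz] & Hwz)|Hn].
    - apply Hz; lra.
    - exfalso. assert (m <= w); [|lra]. apply Hlub. intros z Ez.
      destruct (Rle_or_lt z w); auto. exfalso; apply Hn; eauto. }
  assert (Hm : h m <= h x).
  { destruct (Req_dec m x) as [->|Hne]; [lra|].
    destruct (Hleft m ltac:(lra)) as (d & Hd & Hd').
    set (s := Rmax x (m - d / 2)).
    assert (x <= s) by apply Rmax_l.
    assert (m - d / 2 <= s) by apply Rmax_r.
    assert (s < m) by (apply Rmax_lub_lt; lra).
    pose proof (Hd' s ltac:(lra) ltac:(lra)). pose proof (Hbelow s ltac:(lra)). lra. }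
  destruct (Req_dec m y) as [<-|Hne]; auto.
  exfalso. destruct (Hright m ltac:(lra)) as (d & Hd & Hd').
  set (z := Rmin (m + d / 2) y).
  assert (z <= m + d / 2) by apply Rmin_l.
  assert (z <= y) by apply Rmin_r.
  assert (m < z) by (apply Rmin_glb_lt; lra).
  assert (z <= m); [|lra].
  apply Hub. split; [lra|]. intros w Hw.
  destruct (Rlt_or_le w m); [apply Hbelow; lra|].
  destruct (Req_dec w m) as [->|]; [exact Hm|].
  pose proof (Hd' w ltac:(lra) ltac:(lra)). lra.
Qed.
End LocalToGlobal.

Lemma constant_on_of_local {U : Type} (g : R -> U) a b :
  (forall t, a <= t < b -> exists d, 0 < d /\ forall s, t < s < t + d -> s <= b -> g s = g t) ->
  (forall t, a < t <= b -> exists d, 0 < d /\ forall s, t - d < s < t -> a <= s -> g s = g t) ->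
  forall x, a <= x <= b -> g x = g a.
Proof.
  intros HR HL x Hx.
  set (h t := if excluded_middle_informative (g t = g a) then 0 else 1).
  assert (Hh : forall s t, g s = g t -> h s = h t) by (intros s t E; unfold h; rewrite E; reflexivity).
  assert (Hxa : h x <= h a).
  { apply (nonincreasing_on_of_local h a b); try lra.
    - intros t Ht. destruct (HR t Ht) as (d & Hd & Hs). exists d; split; auto.
      intros s Hs1 Hs2. rewrite (Hh s t (Hs s Hs1 Hs2)); lra.
    - intros t Ht. destruct (HL t Ht) as (d & Hd & Hs). exists d; split; auto.
      intros s Hs1 Hs2. rewrite (Hh s t (Hs s Hs1 Hs2)); lra. }
  unfold h in Hxa.
  destruct (excluded_middle_informative (g x = g a)); auto.
  destruct (excluded_middle_informative (g a = g a)); [lra| tauto].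
Qed.

(* c can only decrease along [a, b], strictly where g jumps; as c takes the same
   value at both ends, g never jumps. *)
Lemma constant_of_nonincreasing_jumps {U : Type} (g : R -> U) (c : R -> R) a b :
  (forall t, a <= t < b -> exists d, 0 < d /\
     forall s, t < s < t + d -> s <= b -> g s = g t /\ c s = c t) ->
  (forall t, a < t <= b -> exists d gl cl, 0 < d /\
     (forall s, t - d < s < t -> a <= s -> g s = gl /\ c s = cl) /\
     c t <= cl /\ (g t <> gl -> c t < cl)) ->
  c b = c a -> forall t, a <= t <= b -> g t = g a.
Proof.
  intros HR HL Hcab.
  assert (Hmono : forall x y, a <= x -> x <= y -> y <= b -> c y <= c x).
  { apply (nonincreasing_on_of_local c a b).
    - intros t Ht. destruct (HR t Ht) as (d & Hd & Hs). exists d; split; auto.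
      intros s Hs1 Hs2. destruct (Hs s Hs1 Hs2) as [_ ->]; lra.
    - intros t Ht. destruct (HL t Ht) as (d & gl & cl & Hd & Hs & Hle & _). exists d; split; auto.
      intros s Hs1 Hs2. destruct (Hs s Hs1 Hs2) as [_ ->]; lra. }
  apply constant_on_of_local.
  - intros t Ht. destruct (HR t Ht) as (d & Hd & Hs). exists d; split; auto.
    intros s Hs1 Hs2. apply (Hs s Hs1 Hs2).
  - intros t Ht. destruct (HL t Ht) as (d & gl & cl & Hd & Hs & _ & Hlt). exists d; split; auto.
    intros s Hs1 Hs2. destruct (Hs s Hs1 Hs2) as [-> Ecs].
    destruct (classic (g t = gl)) as [E|Hne]; auto.
    pose proof (Hlt Hne). pose proof (Hmono t b ltac:(lra) ltac:(lra) ltac:(lra)).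
    pose proof (Hmono a s ltac:(lra) ltac:(lra) ltac:(lra)). lra.
Qed.

Lemma finite_cover_right_cluster {I : Type} (L : list I) (C : I -> R -> Prop) (t eta : R) :
  0 < eta -> (forall s, t < s < t + eta -> exists i, In i L /\ C i s) ->
  exists i, In i L /\ forall e, 0 < e -> exists s, t < s < t + e /\ C i s.
Proof.
  revert eta. induction L as [|i L IH]; intros eta Heta Hcov.
  - destruct (Hcov (t + eta / 2) ltac:(lra)) as (i & [] & _).
  - destruct (classic (forall e, 0 < e -> exists s, t < s < t + e /\ C i s)) as [Hi|Hi].
    + exists i; split; [left; reflexivity| exact Hi].
    + apply not_all_ex_not in Hi as [e1 He1]. apply imply_to_and in He1 as [He1 Hn].
      destruct (IH (Rmin eta e1)) as (j & Hj & Hj').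
      * apply Rmin_glb_lt; auto.
      * intros s Hs. pose proof (Rmin_l eta e1); pose proof (Rmin_r eta e1).
        destruct (Hcov s ltac:(lra)) as (k & [<-|Hk] & Hk'); eauto.
        exfalso. apply Hn. exists s. split; [lra| exact Hk'].
      * exists j; split; [right; exact Hj| exact Hj'].
Qed.

(** * Edges, rotations and slopes *)

Lemma lin_indep2_zero a b e1x e1y e2x e2y : a * e1x + b * e1y = 0 -> a * e2x + b * e2y = 0 ->
  e1x * e2y - e1y * e2x <> 0 -> a = 0 /\ b = 0.
Proof.
  intros H1 H2 Hd. split; apply (Rmult_eq_reg_r (e1x * e2y - e1y * e2x)); auto.
  - replace (a * (e1x * e2y - e1y * e2x)) with (e2y * (a * e1x + b * e1y) - e1y * (a * e2x + b * e2y))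
      by ring. rewrite H1, H2; ring.
  - replace (b * (e1x * e2y - e1y * e2x)) with (e1x * (a * e2x + b * e2y) - e2x * (a * e1x + b * e1y))
      by ring. rewrite H1, H2; ring.
Qed.

Lemma kapp_vz_sub k X Y : vz (kapp k X) - vz (kapp k Y) =
  vx (krot k) * (vy X - vy Y) - vy (krot k) * (vx X - vx Y).
Proof. unfold kapp, cross; simpl. ring. Qed.

Lemma cross_eq0_of_lin_dep u v mu nu : (mu <> 0 \/ nu <> 0) ->
  mu * vx u + nu * vx v = 0 -> mu * vy u + nu * vy v = 0 -> mu * vz u + nu * vz v = 0 ->
  cross u v = vzero.
Proof.
  intros Hmn H1 H2 H3.
  assert (K : forall q, mu * q = 0 -> nu * q = 0 -> q = 0).
  { intros q A B. destruct Hmn as [Hm|Hn].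
    - apply Rmult_integral in A as [|]; [contradiction| assumption].
    - apply Rmult_integral in B as [|]; [contradiction| assumption]. }
  apply vec_ext; cbn; apply K; clear K Hmn; nsatz.
Qed.

Lemma cross_eq0_two_indep d E1 E2 : cross d E1 = vzero -> cross d E2 = vzero ->
  vx E1 * vy E2 - vy E1 * vx E2 <> 0 -> d = vzero.
Proof.
  intros H1 H2 Hdet.
  pose proof (f_equal vx H1); pose proof (f_equal vy H1); pose proof (f_equal vz H1);
    pose proof (f_equal vz H2). cbn in *.
  destruct (lin_indep2_zero (vx d) (- vy d) (vy E1) (vx E1) (vy E2) (vx E2)) as [Dx Dy];
    [lra| lra| intros E; apply Hdet; lra|].
  assert (Dz : vz d = 0).
  { destruct (Req_dec (vx E1) 0) as [Ex|Ex]; [destruct (Req_dec (vy E1) 0) as [Ey|Ey]|].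
    - exfalso; apply Hdet; rewrite Ex, Ey; ring.
    - apply (Rmult_eq_reg_r (vy E1)); [|exact Ey]. nra.
    - apply (Rmult_eq_reg_r (vx E1)); [|exact Ex]. nra. }
  apply vec_ext; cbn; lra.
Qed.

(* Two faces through the origin, of slopes g_i and g_j, share the edge vector E
   and carry Killing fields whose rotations b_i - b_j are parallel to E. The
   jump of b . (-g, 1) is the slope jump across E times (b_j x E)_z. *)
Lemma rot_normal_jump Ex Ey Ez gix giy gjx gjy bi bj :
  Ez = gix * Ex + giy * Ey -> Ez = gjx * Ex + gjy * Ey -> cross (vsub bi bj) (V Ex Ey Ez) = vzero ->
  (Ex * Ex + Ey * Ey) *
    ((vz bi - vx bi * gix - vy bi * giy) - (vz bj - vx bj * gjx - vy bj * gjy)) =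
  ((giy - gjy) * Ex - (gix - gjx) * Ey) * (vx bj * Ey - vy bj * Ex).
Proof.
  intros Hi Hj Hpar.
  pose proof (f_equal vx Hpar) as C1; pose proof (f_equal vy Hpar) as C2;
    pose proof (f_equal vz Hpar) as C3.
  cbn in C1, C2, C3. clear Hpar. nsatz.
Qed.

Lemma slope_jump_along Ex Ey dx dy u1 u2 : dx * Ex + dy * Ey = 0 ->
  (Ex * Ex + Ey * Ey) * (dx * u1 + dy * u2) = (dy * Ex - dx * Ey) * (Ex * u2 - Ey * u1).
Proof. intros H. nsatz. Qed.

Lemma orth_cross_neq0 Ex Ey dx dy : dx * Ex + dy * Ey = 0 -> (Ex <> 0 \/ Ey <> 0) ->
  (dx <> 0 \/ dy <> 0) -> dy * Ex - dx * Ey <> 0.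
Proof.
  intros Hdot HE Hd Hk.
  assert (Hx : (Ex * Ex + Ey * Ey) * dx = - Ey * (dy * Ex - dx * Ey)) by (clear - Hdot; nsatz).
  assert (Hy : (Ex * Ex + Ey * Ey) * dy = Ex * (dy * Ex - dx * Ey)) by (clear - Hdot; nsatz).
  rewrite Hk, Rmult_0_r in Hx, Hy.
  assert (HN : Ex * Ex + Ey * Ey <> 0) by (destruct HE; nra).
  apply Rmult_integral in Hx as [|]; apply Rmult_integral in Hy as [|]; tauto.
Qed.

Lemma jump_sign N k cdiff slope phi cr s0 sg : 0 < N -> 0 < cr -> s0 <> 0 ->
  N * cdiff = k * phi -> N * slope = k * cr -> s0 * slope <= 0 -> sg * phi > 0 ->
  s0 * sg * cdiff <= 0 /\ (k <> 0 -> s0 * sg * cdiff < 0).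
Proof.
  intros HN Hcr Hs0 Hc Hsl Hconc Hphi.
  assert (Hk : s0 * k <= 0).
  { apply Rnot_lt_le. intros Hk.
    assert (0 < (s0 * k) * cr) by (apply Rmult_lt_0_compat; lra).
    assert ((s0 * k) * cr = N * (s0 * slope)) by (rewrite Rmult_assoc, <- Hsl; ring).
    assert (0 <= N * - (s0 * slope)) by (apply Rmult_le_pos; lra). lra. }
  assert (Hmain : N * (s0 * sg * cdiff) = (s0 * k) * (sg * phi)).
  { transitivity (s0 * sg * (N * cdiff)); [ring| rewrite Hc; ring]. }
  split.
  - apply Rnot_lt_le. intros Hlt.
    assert (0 < N * (s0 * sg * cdiff)) by (apply Rmult_lt_0_compat; lra).
    assert (0 <= - (s0 * k) * (sg * phi)) by (apply Rmult_le_pos; lra). lra.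
  - intros Hk0.
    assert (Hk' : s0 * k < 0).
    { destruct Hk as [|E]; [assumption|]. apply Rmult_integral in E as [|]; contradiction. }
    apply Rnot_le_lt. intros Hge.
    assert (0 <= N * (s0 * sg * cdiff)) by (apply Rmult_le_pos; lra).
    assert (0 < - (s0 * k) * (sg * phi)) by (apply Rmult_lt_0_compat; lra). lra.
Qed.

Section GraphTriangle.
Variables (D : R -> R -> Prop) (f : R -> R -> R) (a b c : vec).
Hypothesis Hgraph : forall X, in_tri (a, b, c) X -> inC D f X.

Lemma graph_lin_dep mu nu :
  mu * (vx b - vx a) + nu * (vx c - vx a) = 0 ->
  mu * (vy b - vy a) + nu * (vy c - vy a) = 0 ->
  mu * (vz b - vz a) + nu * (vz c - vz a) = 0.
Proof.
  intros Hx Hy.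
  pose proof (Rabs_pos mu); pose proof (Rabs_pos nu).
  set (e := 1 / (3 * (Rabs mu + Rabs nu + 1))).
  assert (He : 0 < e) by (unfold e; apply Rdiv_lt_0_compat; lra).
  assert (He3 : e * Rabs mu + e * Rabs nu + e = 1 / 3) by (unfold e; field; lra).
  pose proof (Rmult_abs_bounds e mu ltac:(lra)) as Hmu.
  pose proof (Rmult_abs_bounds e nu ltac:(lra)) as Hnu.
  (* two points of the triangle with the same projection *)
  set (X1 := vscal (1 / 3) (vadd a (vadd b c))).
  set (X2 := vadd X1 (vscal e (vadd (vscal mu (vsub b a)) (vscal nu (vsub c a))))).
  assert (H1 : in_tri (a, b, c) X1).
  { apply in_tri_of_coords with (1/3) (1/3) (1/3); simpl; first [lra | ring]. }
  assert (H2 : in_tri (a, b, c) X2).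
  { apply in_tri_of_coords with (1/3 - e * mu - e * nu) (1/3 + e * mu) (1/3 + e * nu);
      simpl; first [lra | ring]. }
  destruct (Hgraph _ H1) as [_ Z1]. destruct (Hgraph _ H2) as [_ Z2].
  assert (Ex : vx X2 = vx X1) by (simpl; rewrite Hx; ring).
  assert (Ey : vy X2 = vy X1) by (simpl; rewrite Hy; ring).
  rewrite Ex, Ey, <- Z1 in Z2. simpl in Z2.
  assert (Hz : e * (mu * (vz b - vz a) + nu * (vz c - vz a)) = 0) by lra.
  apply Rmult_integral in Hz as [|]; [lra| assumption].
Qed.
End GraphTriangle.

(* A degenerate projection gives a linear dependence of the horizontal edge
   vectors, which the graph property lifts to the edge vectors themselves. *)
Lemma graph_tri_area_neq0 D f t : (forall X, in_tri t X -> inC D f X) -> nondegenerate t ->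
  area2 t <> 0.
Proof.
  destruct t as [[a b] c]. intros Hgraph Hnd Harea. apply Hnd. unfold_tri.
  assert (Hdep : forall mu nu, (mu <> 0 \/ nu <> 0) ->
            mu * (vx b - vx a) + nu * (vx c - vx a) = 0 ->
            mu * (vy b - vy a) + nu * (vy c - vy a) = 0 ->
            cross (vsub b a) (vsub c a) = vzero).
  { intros mu nu Hmn Hx Hy. apply (cross_eq0_of_lin_dep _ _ mu nu Hmn); simpl; auto.
    apply (graph_lin_dep D f a b c Hgraph); auto. }
  destruct (Req_dec (vx c - vx a) 0) as [Ec|Ec]; [destruct (Req_dec (vx b - vx a) 0) as [Eb|Eb]|].
  - destruct (Req_dec (vy c - vy a) 0) as [Fc|Fc].
    + apply (Hdep 0 1); [right; lra| lra| lra].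
    + apply (Hdep (vy c - vy a) (- (vy b - vy a))); [left; exact Fc| rewrite Ec, Eb; ring| ring].
  - apply (Hdep (vx c - vx a) (- (vx b - vx a))); [right; lra| ring| lra].
  - apply (Hdep (vx c - vx a) (- (vx b - vx a))); [left; exact Ec| ring| lra].
Qed.

(** * A square loop *)

(* The boundary of the square [-1, 1]^2, run counterclockwise from (1, -1) and
   parametrised on [0, 5] so that the last side [4, 5] retraces [0, 1]. *)
Definition square_x t := if Rlt_dec t 1 then 1 else if Rlt_dec t 2 then 3 - 2 * t
  else if Rlt_dec t 3 then -1 else if Rlt_dec t 4 then 2 * t - 7 else 1.
Definition square_y t := if Rlt_dec t 1 then -1 + 2 * t else if Rlt_dec t 2 then 1
  else if Rlt_dec t 3 then 5 - 2 * t else if Rlt_dec t 4 then -1 else 2 * t - 9.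

(* On [k, k + 1] the loop is the affine path (a1 + s u1, a2 + s u2), turning
   counterclockwise around the origin. *)
Definition square_side k a1 u1 a2 u2 := (k = 0 \/ k = 1 \/ k = 2 \/ k = 3 \/ k = 4) /\
  a1 * u2 - a2 * u1 = 2 /\
  forall s, k <= s <= k + 1 -> square_x s = a1 + s * u1 /\ square_y s = a2 + s * u2.

Ltac square_cases := unfold square_x, square_y;
  repeat match goal with |- context [Rlt_dec ?a ?b] => destruct (Rlt_dec a b) end; lra.

Lemma square_side0 : square_side 0 1 0 (-1) 2.
Proof. split; [left; reflexivity| split; [lra|]]. intros s Hs. split; square_cases. Qed.
Lemma square_side1 : square_side 1 3 (-2) 1 0.
Proof. split; [right; left; reflexivity| split; [lra|]]. intros s Hs. split; square_cases. Qed.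
Lemma square_side2 : square_side 2 (-1) 0 5 (-2).
Proof. split; [right; right; left; reflexivity| split; [lra|]]. intros s Hs. split; square_cases. Qed.
Lemma square_side3 : square_side 3 (-7) 2 (-1) 0.
Proof. split; [do 3 right; left; reflexivity| split; [lra|]]. intros s Hs. split; square_cases. Qed.
Lemma square_side4 : square_side 4 1 0 (-9) 2.
Proof. split; [do 4 right; reflexivity| split; [lra|]]. intros s Hs. split; square_cases. Qed.

Lemma square_side_right t : 0 <= t < 5 ->
  exists k a1 u1 a2 u2, square_side k a1 u1 a2 u2 /\ k <= t < k + 1.
Proof.
  intros Ht.
  destruct (Rlt_dec t 1); [exists 0, 1, 0, (-1), 2; split; [apply square_side0| lra]|].
  destruct (Rlt_dec t 2); [exists 1, 3, (-2), 1, 0; split; [apply square_side1| lra]|].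
  destruct (Rlt_dec t 3); [exists 2, (-1), 0, 5, (-2); split; [apply square_side2| lra]|].
  destruct (Rlt_dec t 4); [exists 3, (-7), 2, (-1), 0; split; [apply square_side3| lra]|].
  exists 4, 1, 0, (-9), 2; split; [apply square_side4| lra].
Qed.

Lemma square_side_left t : 0 < t <= 5 ->
  exists k a1 u1 a2 u2, square_side k a1 u1 a2 u2 /\ k < t <= k + 1.
Proof.
  intros Ht.
  destruct (Rle_dec t 1); [exists 0, 1, 0, (-1), 2; split; [apply square_side0| lra]|].
  destruct (Rle_dec t 2); [exists 1, 3, (-2), 1, 0; split; [apply square_side1| lra]|].
  destruct (Rle_dec t 3); [exists 2, (-1), 0, 5, (-2); split; [apply square_side2| lra]|].
  destruct (Rle_dec t 4); [exists 3, (-7), 2, (-1), 0; split; [apply square_side3| lra]|].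
  exists 4, 1, 0, (-9), 2; split; [apply square_side4| lra].
Qed.

Lemma square_side_range k a1 u1 a2 u2 : square_side k a1 u1 a2 u2 -> 0 <= k /\ k + 1 <= 5.
Proof. intros [H _]; lra. Qed.

Lemma square_norm_le t : 0 <= t <= 5 -> square_x t * square_x t + square_y t * square_y t <= 2.
Proof.
  intros Ht. unfold square_x, square_y.
  repeat match goal with |- context [Rlt_dec ?a ?b] => destruct (Rlt_dec a b) end; nra.
Qed.

Lemma square_periodic s : 0 <= s <= 1 -> square_x (s + 4) = square_x s /\ square_y (s + 4) = square_y s.
Proof. intros Hs. split; square_cases. Qed.

Lemma square_side_cross k a1 u1 a2 u2 s s' : square_side k a1 u1 a2 u2 ->
  k <= s <= k + 1 -> k <= s' <= k + 1 ->
  square_x s * square_y s' - square_y s * square_x s' = 2 * (s' - s).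
Proof.
  intros (_ & Hc & H) Hs Hs'. destruct (H s Hs) as [-> ->], (H s' Hs') as [-> ->].
  rewrite <- Hc. ring.
Qed.

Lemma square_side_turn k a1 u1 a2 u2 s : square_side k a1 u1 a2 u2 -> k <= s <= k + 1 ->
  square_x s * u2 - square_y s * u1 = 2.
Proof. intros (_ & Hc & H) Hs. destruct (H s Hs) as [-> ->]. rewrite <- Hc. ring. Qed.

Lemma ratio_between m z : 0 < m -> - m <= z <= m -> -1 <= z / m <= 1 /\ z = m * (z / m).
Proof.
  intros Hm Hz. split; [|field; lra].
  split; apply (Rmult_le_reg_r m); auto; unfold Rdiv; rewrite Rmult_assoc, Rinv_l, Rmult_1_r; lra.
Qed.

Lemma square_polar X Y : (X <> 0 \/ Y <> 0) -> exists t m, 0 <= t <= 4 /\ 0 < m /\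
  m * m <= X * X + Y * Y /\ X = m * square_x t /\ Y = m * square_y t.
Proof.
  intros HXY.
  assert (HXY' : ~ (X = 0 /\ Y = 0)) by (intros [A B]; destruct HXY; auto).
  pose proof (Rle_0_sqr X); pose proof (Rle_0_sqr Y); unfold Rsqr in *.
  destruct (classic (Y <= X /\ - X <= Y)) as [[A1 A2]|NA].
  { assert (HX : 0 < X) by (destruct (Rle_or_lt X 0); [exfalso; apply HXY'; split; lra| auto]).
    destruct (ratio_between X Y HX ltac:(lra)) as [R1 R2].
    exists ((Y / X + 1) / 2), X. destruct square_side0 as (_ & _ & S).
    destruct (S ((Y / X + 1) / 2)) as [E1 E2]; [lra|].
    repeat split; try lra.
    - rewrite E1; ring.
    - rewrite E2, R2 at 1. field. lra. }
  destruct (classic (X <= Y /\ - Y <= X)) as [[A1 A2]|NB].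
  { assert (HY : 0 < Y) by (destruct (Rle_or_lt Y 0); [exfalso; apply HXY'; split; lra| auto]).
    destruct (ratio_between Y X HY ltac:(lra)) as [R1 R2].
    exists ((3 - X / Y) / 2), Y. destruct square_side1 as (_ & _ & S).
    destruct (S ((3 - X / Y) / 2)) as [E1 E2]; [lra|].
    repeat split; try lra.
    - rewrite E1, R2 at 1. field. lra.
    - rewrite E2; ring. }
  destruct (classic (X <= Y /\ Y <= - X)) as [[A1 A2]|NC].
  { assert (HX : 0 < - X) by (destruct (Rle_or_lt 0 X); [exfalso; apply HXY'; split; lra| lra]).
    destruct (ratio_between (- X) Y HX ltac:(lra)) as [R1 R2].
    exists ((5 - Y / (- X)) / 2), (- X). destruct square_side2 as (_ & _ & S).
    destruct (S ((5 - Y / (- X)) / 2)) as [E1 E2]; [lra|].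
    repeat split; try lra.
    - rewrite E1; ring.
    - rewrite E2, R2 at 1. field. lra. }
  assert (A1 : Y <= X) by (apply Rnot_lt_le; intro; apply NC; split; try lra;
     apply Rnot_lt_le; intro; apply NB; split; lra).
  assert (A2 : X <= - Y) by (apply Rnot_lt_le; intro; apply NA; split; lra).
  assert (HY : 0 < - Y) by (destruct (Rle_or_lt 0 Y); [exfalso; apply HXY'; split; lra| lra]).
  destruct (ratio_between (- Y) X HY ltac:(lra)) as [R1 R2].
  exists ((X / (- Y) + 7) / 2), (- Y). destruct square_side3 as (_ & _ & S).
  destruct (S ((X / (- Y) + 7) / 2)) as [E1 E2]; [lra|].
  repeat split; try lra.
  - rewrite E1, R2 at 1. field. lra.
  - rewrite E2; ring.
Qed.

(** * Around the vertex p *)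

Section Cap.
Variables (D : R -> R -> Prop) (f : R -> R -> R) (I : Type) (T : I -> tri) (K : I -> killing)
  (Z : vec -> vec) (p : vec).
Hypothesis Hcap : polyhedral_convex_cap D f.
Hypothesis Hdef : inf_isometric_deformation D f I T K Z.
Hypothesis Hvert : is_vertexC D f p.

Let Px := vx p.
Let Py := vy p.

Lemma T_in_cap i X : in_tri (T i) X -> inC D f X.
Proof. destruct Hdef as [(_ & H & _) _]. apply H. Qed.

Lemma T_area i : area2 (T i) <> 0.
Proof.
  destruct Hdef as [(Hnd & _) _].
  apply (graph_tri_area_neq0 D f); [apply T_in_cap| apply Hnd].
Qed.

Lemma in_proj_T_iff i x y :
  in_proj (T i) x y <-> 0 <= bary1 (T i) x y /\ 0 <= bary2 (T i) x y /\ 0 <= bary3 (T i) x y.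
Proof. apply in_proj_iff_bary, T_area. Qed.

Lemma graph_in_T i x y : in_proj (T i) x y -> in_tri (T i) (V x y (f x y)).
Proof.
  intros (X & HX & Ex & Ey). destruct (T_in_cap i X HX) as [_ Hz].
  replace (V x y (f x y)) with X; auto. apply vec_ext; simpl; congruence.
Qed.

Lemma f_eq_tri_height i x y : in_proj (T i) x y -> f x y = tri_height (T i) x y.
Proof. intros H. apply (in_tri_height _ _ (T_area i) (graph_in_T i x y H)). Qed.

Lemma Z_graph_T i x y : interior2 D x y -> in_proj (T i) x y ->
  Z (V x y (f x y)) = kapp (K i) (V x y (f x y)).
Proof.
  intros Hi Hin. destruct Hdef as (_ & _ & HZ). apply HZ; [apply graph_in_T; auto| split; auto].
Qed.

Lemma p_interior : interior2 D Px Py.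
Proof. apply Hvert. Qed.

Lemma p_graph : V Px Py (f Px Py) = p.
Proof. destruct Hvert as [[_ Hz] _]. apply vec_ext; simpl; auto. Qed.

Lemma p_in_T i : in_proj (T i) Px Py -> in_tri (T i) p.
Proof. intros H. rewrite <- p_graph. apply graph_in_T; auto. Qed.

Lemma Z_p i : in_proj (T i) Px Py -> Z p = kapp (K i) p.
Proof. intros H. rewrite <- p_graph. apply Z_graph_T; auto. apply p_interior. Qed.

Lemma not_in_proj_near_p (L : list I) : exists r, 0 < r /\
  forall i, In i L -> ~ in_proj (T i) Px Py -> forall x y, pdist2 x y Px Py < r -> ~ in_proj (T i) x y.
Proof.
  induction L as [|j L IH]; [exists 1; split; [lra| intros i []]|].
  destruct IH as (r & Hr & H).
  destruct (classic (in_proj (T j) Px Py)) as [Hj|Hj].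
  - exists r; split; auto. intros i [<-|Hi] Hn; [contradiction| apply H; auto].
  - destruct (not_in_proj_near _ _ _ (T_area j) Hj) as (r' & Hr' & H').
    exists (Rmin r r'); split; [apply Rmin_glb_lt; auto|].
    pose proof (Rmin_l r r'); pose proof (Rmin_r r r').
    intros i [<-|Hi] Hn x y Hxy; [apply H'; lra| apply H; auto; lra].
Qed.

(* The triangles meeting the graph over a small disc around p are among the
   finitely many that come close to p in space: f is continuous at p. *)
Lemma tris_near_p_finite : exists r (L : list I), 0 < r /\
  forall x y, pdist2 x y Px Py < r -> interior2 D x y /\ forall i, in_proj (T i) x y -> In i L.
Proof.
  destruct (interior2_open D Px Py p_interior) as (r0 & Hr0 & Hint).
  destruct Hdef as [(_ & _ & _ & Hlf & _) _].
  destruct (Hlf p ltac:(apply Hvert)) as (e1 & L & He1 & HL).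
  destruct Hcap as (_ & _ & _ & _ & Hcont & _).
  pose proof (Rmin_l 1 (e1 / 2)); pose proof (Rmin_r 1 (e1 / 2)).
  assert (Heps : 0 < Rmin 1 (e1 / 2)) by (apply Rmin_glb_lt; lra).
  destruct (Hcont Px Py (interior2_in _ _ _ p_interior) _ Heps) as (d1 & Hd1 & Hc).
  pose proof (Rmin_l (Rmin r0 d1) (e1 / 2)); pose proof (Rmin_r (Rmin r0 d1) (e1 / 2)).
  pose proof (Rmin_l r0 d1); pose proof (Rmin_r r0 d1).
  exists (Rmin (Rmin r0 d1) (e1 / 2)), L. split; [repeat apply Rmin_glb_lt; lra|]. intros x y Hxy.
  assert (Hi : interior2 D x y) by (apply Hint; lra).
  split; auto. intros i Hin. apply HL. exists (V x y (f x y)). split; [apply graph_in_T; auto|].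
  unfold dist2; simpl. fold Px Py. rewrite <- p_graph; simpl.
  specialize (Hc x y (interior2_in _ _ _ Hi) ltac:(lra)).
  assert (Hz : (f x y - f Px Py) ^ 2 < e1 / 2).
  { rewrite <- (pow2_abs (f x y - f Px Py)). pose proof (Rabs_pos (f x y - f Px Py)). nra. }
  unfold pdist2 in Hxy. lra.
Qed.

Definition star_disc r (L : list I) := forall x y, pdist2 x y Px Py < r ->
  interior2 D x y /\ (exists i, In i L /\ in_proj (T i) x y) /\
  (forall i, in_proj (T i) x y -> In i L /\ in_proj (T i) Px Py).

Lemma star_disc_exists : exists r L, 0 < r /\ star_disc r L.
Proof.
  destruct tris_near_p_finite as (r1 & L & Hr1 & Hnear).
  destruct (not_in_proj_near_p L) as (r2 & Hr2 & Hfar).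
  destruct Hdef as [(_ & _ & Hcov & _) _].
  exists (Rmin r1 r2), L. split; [apply Rmin_glb_lt; auto|]. intros x y Hxy.
  pose proof (Rmin_l r1 r2); pose proof (Rmin_r r1 r2).
  destruct (Hnear x y ltac:(lra)) as [Hi HinL].
  split; [exact Hi| split].
  - destruct (Hcov (V x y (f x y))) as (i & HXi); [split; simpl; auto|].
    assert (in_proj (T i) x y) by (exists (V x y (f x y)); auto). eauto.
  - intros i Hin. split; auto. apply NNPP; intro Hn.
    apply (Hfar i (HinL i Hin) Hn x y); auto. lra.
Qed.

Lemma p_vert_of_in_T i j : is_vert (T j) p -> in_tri (T i) p -> is_vert (T i) p.
Proof.
  intros Hj Hi. destruct (classic (i = j)) as [->|Hij]; auto.
  apply NNPP; intro Hnv.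
  destruct Hdef as [(_ & _ & _ & _ & _ & Hmeet & _) _].
  specialize (Hmeet i j Hij p Hi (vert_in_tri _ _ Hj)).
  (* the barycentric coordinate of T j attached to its vertex p *)
  assert (HF : exists F cx cy, affine2 F cx cy /\ F Px Py = 1 /\
            forall v, is_vert (T j) v -> v <> p -> F (vx v) (vy v) = 0).
  { pose proof (T_area j) as Hd. destruct (T j) as [[a b] c].
    destruct (bary_at_vertices a b c Hd) as (A1 & A2 & A3 & B1 & B2 & B3 & C1 & C2 & C3).
    destruct Hj as [ <- | [ <- | <- ]].
    - destruct (bary1_affine (p, b, c)) as (cx & cy & HA). exists (bary1 (p, b, c)), cx, cy.
      repeat split; auto. intros v [ -> | [ -> | -> ]] Hv; tauto.
    - destruct (bary2_affine (a, p, c)) as (cx & cy & HA). exists (bary2 (a, p, c)), cx, cy.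
      repeat split; auto. intros v [ -> | [ -> | -> ]] Hv; tauto.
    - destruct (bary3_affine (a, b, p)) as (cx & cy & HA). exists (bary3 (a, b, p)), cx, cy.
      repeat split; auto. intros v [ -> | [ -> | -> ]] Hv; tauto. }
  destruct HF as (F & cx & cy & HF & HFp & HFv).
  destruct (T i) as [[a b] c].
  destruct Hmeet as (m1 & m2 & m3 & H1 & H2 & H3 & Hs & Hp & V1 & V2 & V3).
  assert (Hterm : forall m v, 0 <= m -> (0 < m -> is_vert (T j) v) -> v <> p ->
            m * F (vx v) (vy v) = 0).
  { intros m v Hm Hv Hvp.
    destruct (Rle_lt_or_eq_dec 0 m Hm) as [h|<-]; [rewrite (HFv v (Hv h) Hvp)|]; ring. }
  pose proof (affine2_comb F cx cy m1 m2 m3 (vx a) (vy a) (vx b) (vy b) (vx c) (vy c) HF Hs) as E.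
  unfold Px, Py in HFp. rewrite Hp in HFp. cbn in HFp.
  rewrite (Hterm m1 a), (Hterm m2 b), (Hterm m3 c) in E; auto;
    try (intros ->; apply Hnv; cbn; tauto).
  replace (m1 * vx a + (m2 * vx b + m3 * vx c)) with (m1 * vx a + m2 * vx b + m3 * vx c) in HFp by ring.
  replace (m1 * vy a + (m2 * vy b + m3 * vy c)) with (m1 * vy a + m2 * vy b + m3 * vy c) in HFp by ring.
  lra.
Qed.

Lemma not_affine_near_p e cx cy : 0 < e ->
  ~ (forall x y, pdist2 x y Px Py < e -> f x y = f Px Py + (x - Px) * cx + (y - Py) * cy).
Proof.
  intros He H. destruct Hvert as [_ Hn]. apply Hn.
  exists 1, 0, cx, e. split; [left; lra|]. split; auto.
  intros x y t H1 H2. rewrite (H _ _ H2), (H _ _ H1). ring.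
Qed.

Lemma p_not_in_open_face i :
  0 < bary1 (T i) Px Py -> 0 < bary2 (T i) Px Py -> 0 < bary3 (T i) Px Py -> False.
Proof.
  intros H1 H2 H3.
  destruct (bary1_affine (T i)) as (c1 & d1 & A1), (bary2_affine (T i)) as (c2 & d2 & A2),
    (bary3_affine (T i)) as (c3 & d3 & A3).
  destruct (affine2_pos_near _ _ _ _ _ A1 H1) as (r1 & Hr1 & F1).
  destruct (affine2_pos_near _ _ _ _ _ A2 H2) as (r2 & Hr2 & F2).
  destruct (affine2_pos_near _ _ _ _ _ A3 H3) as (r3 & Hr3 & F3).
  assert (HP : in_proj (T i) Px Py) by (apply in_proj_T_iff; lra).
  apply (not_affine_near_p (Rmin r1 (Rmin r2 r3)) (tri_slope_x (T i)) (tri_slope_y (T i)));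
    [repeat apply Rmin_glb_lt; auto|].
  intros x y Hxy.
  pose proof (Rmin_l r1 (Rmin r2 r3)); pose proof (Rmin_r r1 (Rmin r2 r3)).
  pose proof (Rmin_l r2 r3); pose proof (Rmin_r r2 r3).
  assert (Hin : in_proj (T i) x y).
  { apply in_proj_T_iff. repeat split; left; [apply F1| apply F2| apply F3]; lra. }
  rewrite (f_eq_tri_height _ _ _ Hin), (f_eq_tri_height _ _ _ HP). apply tri_height_affine.
Qed.

(* The line clusters at s on one of the finitely many triangles, which is closed
   and convex. *)
Lemma line_in_T_right (L : list I) (Q : I -> Prop) x0 y0 v1 v2 s s1 : s < s1 ->
  (forall s', s < s' < s1 -> exists i, In i L /\ Q i /\ in_proj (T i) (x0 + s' * v1) (y0 + s' * v2)) ->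
  exists i d, Q i /\ 0 < d /\
    forall s', s <= s' <= s + d -> in_proj (T i) (x0 + s' * v1) (y0 + s' * v2).
Proof.
  intros Hs Hcov.
  destruct (finite_cover_right_cluster L (fun i s' => Q i /\ in_proj (T i) (x0 + s' * v1) (y0 + s' * v2))
    s (s1 - s)) as (i & _ & Hi); [lra| intros s' Hs'; apply Hcov; lra|].
  destruct (Hi 1 ltac:(lra)) as (s2 & Hs2 & HQ & Hin2).
  assert (Hseg : forall F cx cy, affine2 F cx cy ->
     (forall s', in_proj (T i) (x0 + s' * v1) (y0 + s' * v2) -> 0 <= F (x0 + s' * v1) (y0 + s' * v2)) ->
     forall s', s <= s' <= s2 -> 0 <= F (x0 + s' * v1) (y0 + s' * v2)).
  { intros F cx cy HF Hpos.
    set (g s' := F (x0 + s' * v1) (y0 + s' * v2)).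
    assert (Hg : forall s', g s' = g s + (s' - s) * (cx * v1 + cy * v2))
      by (intros s'; apply (affine2_line F cx cy x0 y0 v1 v2 s s' HF)).
    apply (affine1_nonneg_between g _ s s2 Hg); [| apply Hpos; auto].
    apply Rnot_lt_le. intro Hn.
    destruct (affine1_neg_right g _ s Hg Hn) as (e & He & He').
    destruct (Hi e He) as (s3 & Hs3 & _ & Hin3).
    specialize (Hpos s3 Hin3). specialize (He' s3 Hs3). unfold g in He'. lra. }
  exists i, (s2 - s). split; auto. split; [lra|]. intros s' Hs'.
  destruct (bary1_affine (T i)) as (c1 & d1 & A1), (bary2_affine (T i)) as (c2 & d2 & A2),
    (bary3_affine (T i)) as (c3 & d3 & A3).
  apply in_proj_T_iff.
  repeat split; [apply (Hseg _ _ _ A1)| apply (Hseg _ _ _ A2)| apply (Hseg _ _ _ A3)];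
    try lra; intros u Hu; apply in_proj_T_iff in Hu; tauto.
Qed.

Lemma line_in_T_left (L : list I) (Q : I -> Prop) x0 y0 v1 v2 s0 s : s0 < s ->
  (forall s', s0 < s' < s -> exists i, In i L /\ Q i /\ in_proj (T i) (x0 + s' * v1) (y0 + s' * v2)) ->
  exists i d, Q i /\ 0 < d /\
    forall s', s - d <= s' <= s -> in_proj (T i) (x0 + s' * v1) (y0 + s' * v2).
Proof.
  intros Hs Hcov.
  destruct (line_in_T_right L Q x0 y0 (- v1) (- v2) (- s) (- s0)) as (i & d & HQ & Hd & H); [lra| |].
  - intros s' Hs'. destruct (Hcov (- s') ltac:(lra)) as (i & Hi & HQ & Hin).
    exists i. replace (s' * - v1) with (- s' * v1) by ring.
    replace (s' * - v2) with (- s' * v2) by ring. auto.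
  - exists i, d. split; auto; split; auto. intros s' Hs'.
    specialize (H (- s') ltac:(lra)).
    replace (- s' * - v1) with (s' * v1) in H by ring.
    replace (- s' * - v2) with (s' * v2) in H by ring. exact H.
Qed.

Section OpenEdge.
Variables (a b : vec).
Hypothesis Hab : vx a <> vx b \/ vy a <> vy b.
Hypothesis Hshared : forall j, in_proj (T j) Px Py -> is_vert (T j) a /\ is_vert (T j) b.

Let v1 := vx b - vx a.
Let v2 := vy b - vy a.
Let c0 := vz b - vz a.

Lemma f_slope_along_edge i x y s s' : in_proj (T i) Px Py ->
  in_proj (T i) (x + s * v1) (y + s * v2) -> in_proj (T i) (x + s' * v1) (y + s' * v2) ->
  f (x + s' * v1) (y + s' * v2) - s' * c0 = f (x + s * v1) (y + s * v2) - s * c0.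
Proof.
  intros HP H1 H2. rewrite (f_eq_tri_height _ _ _ H1), (f_eq_tri_height _ _ _ H2).
  rewrite (affine2_line _ _ _ x y v1 v2 s s' (tri_height_affine (T i))).
  destruct (Hshared i HP) as [Va Vb].
  assert (E : tri_slope_x (T i) * v1 + tri_slope_y (T i) * v2 = c0).
  { unfold v1, v2, c0.
    rewrite <- (tri_height_vert _ _ (T_area i) Va), <- (tri_height_vert _ _ (T_area i) Vb).
    rewrite (tri_height_affine (T i) (vx b) (vy b) (vx a) (vy a)). ring. }
  rewrite E. ring.
Qed.

(* Along a segment in the star disc, f - s c0 is locally constant: each point
   has on either side a triangle containing p, hence a and b. *)
Lemma f_affine_along_edge r L : 0 < r -> star_disc r L ->
  forall x y t, 0 <= t -> pdist2 x y Px Py < r -> pdist2 (x + t * v1) (y + t * v2) Px Py < r ->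
  f (x + t * v1) (y + t * v2) = f x y + t * c0.
Proof.
  intros Hr Hg x y t Ht H0 H1.
  set (h s := f (x + s * v1) (y + s * v2) - s * c0).
  assert (Hcov : forall s, 0 <= s <= t -> exists i, In i L /\ in_proj (T i) Px Py /\
             in_proj (T i) (x + s * v1) (y + s * v2)).
  { intros s Hs. destruct (Hg _ _ (pdist2_segment x y v1 v2 Px Py t r s Hs H0 H1))
      as (_ & (i & HiL & Hi) & Hall).
    exists i. split; auto. split; auto. apply (Hall i Hi). }
  assert (Hc : h t = h 0).
  { apply (constant_on_of_local h 0 t); [| |lra].
    - intros s Hs. destruct (line_in_T_right L (fun i => in_proj (T i) Px Py) x y v1 v2 s t)
        as (i & d & HP & Hd & Hi); [lra| intros s' Hs'; apply Hcov; lra|].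
      exists d; split; auto. intros s' Hs' Hs't.
      apply (f_slope_along_edge i x y s s' HP); apply Hi; lra.
    - intros s Hs. destruct (line_in_T_left L (fun i => in_proj (T i) Px Py) x y v1 v2 0 s)
        as (i & d & HP & Hd & Hi); [lra| intros s' Hs'; apply Hcov; lra|].
      exists d; split; auto. intros s' Hs' Hs0.
      apply (f_slope_along_edge i x y s s' HP); apply Hi; lra. }
  unfold h in Hc. rewrite !Rmult_0_l, !Rplus_0_r in Hc. lra.
Qed.

Lemma p_not_on_open_edge : False.
Proof.
  destruct star_disc_exists as (r & L & Hr & Hg).
  destruct Hvert as [_ Hn]. apply Hn. exists v1, v2, c0, r.
  split; [unfold v1, v2; destruct Hab; [left| right]; lra|]. split; auto.
  intros x y t H0 H1.
  destruct (Rle_or_lt 0 t) as [Ht|Ht]; [apply (f_affine_along_edge r L); auto|].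
  pose proof (f_affine_along_edge r L Hr Hg (x + t * v1) (y + t * v2) (- t) ltac:(lra) H1) as E.
  replace (x + t * v1 + - t * v1) with x in E by ring.
  replace (y + t * v2 + - t * v2) with y in E by ring.
  specialize (E H0). lra.
Qed.
End OpenEdge.

Lemma shared_support i a b c j : T i = (a, b, c) -> in_proj (T i) Px Py -> in_proj (T j) Px Py ->
  (0 < bary1 (a, b, c) Px Py -> is_vert (T j) a) /\ (0 < bary2 (a, b, c) Px Py -> is_vert (T j) b) /\
  (0 < bary3 (a, b, c) Px Py -> is_vert (T j) c).
Proof.
  intros Ei Hi Hj. destruct (classic (j = i)) as [->|Hne]; [rewrite Ei; cbn; tauto|].
  destruct Hdef as [(_ & _ & _ & _ & _ & Hmeet & _) _].
  specialize (Hmeet i j (fun e => Hne (eq_sym e)) p (p_in_T i Hi) (p_in_T j Hj)). rewrite Ei in Hmeet.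
  destruct Hmeet as (m1 & m2 & m3 & _ & _ & _ & Hs & Hp & V1 & V2 & V3).
  pose proof (T_area i) as Hd. rewrite Ei in Hd.
  destruct (bary_of_comb a b c m1 m2 m3 Hd Hs) as (B1 & B2 & B3).
  unfold Px, Py. rewrite Hp. cbn [vx vy vadd vscal].
  replace (m1 * vx a + (m2 * vx b + m3 * vx c)) with (m1 * vx a + m2 * vx b + m3 * vx c) by ring.
  replace (m1 * vy a + (m2 * vy b + m3 * vy c)) with (m1 * vy a + m2 * vy b + m3 * vy c) by ring.
  rewrite B1, B2, B3. auto.
Qed.

Lemma p_vertex_of_T : exists j, is_vert (T j) p.
Proof.
  apply NNPP; intros Hnone.
  destruct Hdef as [(_ & _ & Hcov & _) _].
  destruct (Hcov p ltac:(apply Hvert)) as (i & Hi).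
  assert (HP : in_proj (T i) Px Py) by (exists p; auto).
  pose proof (T_area i) as Hd.
  destruct (T i) as [[a b] c] eqn:Ei.
  destruct (in_tri_coords _ _ _ _ Hi) as (l1 & l2 & l3 & H1 & H2 & H3 & Hs & Ex & Ey & Ez).
  destruct (bary_of_comb a b c l1 l2 l3 Hd Hs) as (B1 & B2 & B3).
  assert (Hsh : forall j, in_proj (T j) Px Py ->
            (0 < l1 -> is_vert (T j) a) /\ (0 < l2 -> is_vert (T j) b) /\ (0 < l3 -> is_vert (T j) c)).
  { intros j Hj. pose proof (shared_support i a b c j Ei ltac:(rewrite Ei; exact HP) Hj) as S.
    unfold Px, Py in S. rewrite Ex, Ey, B1, B2, B3 in S. exact S. }
  assert (Hnot1 : forall v, is_vert (a, b, c) v -> vx p = vx v -> vy p = vy v -> vz p = vz v -> False).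
  { intros v Hv E1 E2 E3. apply Hnone. exists i. rewrite Ei.
    replace p with v by (apply vec_ext; auto). exact Hv. }
  destruct (area2_proj_neq a b c Hd) as (Nab & Nac & Nbc).
  destruct (Rle_lt_or_eq_dec 0 l1 H1) as [P1|P1];
  destruct (Rle_lt_or_eq_dec 0 l2 H2) as [P2|P2];
  destruct (Rle_lt_or_eq_dec 0 l3 H3) as [P3|P3]; subst.
  - apply (p_not_in_open_face i); rewrite Ei; unfold Px, Py; rewrite Ex, Ey, ?B1, ?B2, ?B3; assumption.
  - apply (p_not_on_open_edge a b Nab). intros j Hj. destruct (Hsh j Hj); tauto.
  - apply (p_not_on_open_edge a c Nac). intros j Hj. destruct (Hsh j Hj); tauto.
  - apply (Hnot1 a); [left; reflexivity|..];
      rewrite ?Ex, ?Ey, ?Ez; replace l1 with 1 by lra; ring.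
  - apply (p_not_on_open_edge b c Nbc). intros j Hj. destruct (Hsh j Hj); tauto.
  - apply (Hnot1 b); [right; left; reflexivity|..];
      rewrite ?Ex, ?Ey, ?Ez; replace l2 with 1 by lra; ring.
  - apply (Hnot1 c); [right; right; reflexivity|..];
      rewrite ?Ex, ?Ey, ?Ez; replace l3 with 1 by lra; ring.
  - lra.
Qed.

Lemma concave_le_tri_height s0 i x y : concave_on D (fun x y => s0 * f x y) -> D x y ->
  s0 * f x y <= s0 * tri_height (T i) x y.
Proof.
  intros Hconc HD.
  destruct (in_proj_extend_through_center (T i) x y (T_area i)) as (x0 & y0 & e & He & H0 & Hw).
  set (wx := (1 + e) * x0 - e * x) in Hw. set (wy := (1 + e) * y0 - e * y) in Hw.
  set (t := e / (1 + e)).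
  assert (Ht : 0 < t < 1).
  { unfold t. split; [apply Rdiv_lt_0_compat; lra|].
    apply (Rmult_lt_reg_r (1 + e)); [lra|]. field_simplify; lra. }
  assert (Ex : (1 - t) * wx + t * x = x0) by (unfold t, wx; field; lra).
  assert (Ey : (1 - t) * wy + t * y = y0) by (unfold t, wy; field; lra).
  destruct (T_in_cap i _ (graph_in_T i _ _ Hw)) as [HDw _].
  pose proof (Hconc wx wy x y t HDw HD ltac:(lra)) as Hc. cbn beta in Hc.
  rewrite Ex, Ey, (f_eq_tri_height i _ _ Hw), (f_eq_tri_height i _ _ H0) in Hc.
  pose proof (affine2_comb _ _ _ (1 - t) t 0 wx wy x y 0 0 (tri_height_affine (T i)) ltac:(ring)) as EF.
  rewrite !Rmult_0_l, !Rplus_0_r, Ex, Ey in EF.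
  rewrite EF in Hc.
  apply (Rmult_le_reg_l t); [lra| nra].
Qed.

Definition rot i := krot (K i).
Definition slope_x i := tri_slope_x (T i).
Definition slope_y i := tri_slope_y (T i).
(* (-slope_x i, -slope_y i, 1) is normal to the face of T i. *)
Definition rot_normal i := vz (rot i) - vx (rot i) * slope_x i - vy (rot i) * slope_y i.
(* By kapp_vz_sub, vz (Z X) - vz (Z p) = vert_var i (vx X) (vy X) for X on T i. *)
Definition vert_var i x y := vx (rot i) * (y - Py) - vy (rot i) * (x - Px).

Lemma f_sub_p i x y : in_proj (T i) Px Py -> in_proj (T i) x y ->
  f x y - f Px Py = slope_x i * (x - Px) + slope_y i * (y - Py).
Proof.
  intros HP H. rewrite (f_eq_tri_height _ _ _ H), (f_eq_tri_height _ _ _ HP).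
  rewrite (tri_height_affine (T i) x y Px Py). unfold slope_x, slope_y. ring.
Qed.

Lemma rot_sub_parallel i j x y : in_proj (T i) Px Py -> in_proj (T j) Px Py -> interior2 D x y ->
  in_proj (T i) x y -> in_proj (T j) x y ->
  cross (vsub (rot i) (rot j)) (vsub (V x y (f x y)) p) = vzero.
Proof.
  intros HPi HPj Hint Hi Hj.
  pose proof (Z_graph_T i x y Hint Hi) as Zi. pose proof (Z_graph_T j x y Hint Hj) as Zj.
  pose proof (Z_p i HPi) as Zpi. pose proof (Z_p j HPj) as Zpj.
  rewrite Zi in Zj. rewrite Zpi in Zpj. unfold rot.
  destruct (K i) as [ti ri], (K j) as [tj rj]. unfold kapp in Zj, Zpj; cbn in *.
  pose proof (f_equal vx Zj); pose proof (f_equal vy Zj); pose proof (f_equal vz Zj).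
  pose proof (f_equal vx Zpj); pose proof (f_equal vy Zpj); pose proof (f_equal vz Zpj).
  cbn in *. apply vec_ext; cbn; lra.
Qed.

Lemma same_data_of_two_points i j x1 y1 x2 y2 : in_proj (T i) Px Py -> in_proj (T j) Px Py ->
  interior2 D x1 y1 -> interior2 D x2 y2 ->
  in_proj (T i) x1 y1 -> in_proj (T j) x1 y1 -> in_proj (T i) x2 y2 -> in_proj (T j) x2 y2 ->
  (x1 - Px) * (y2 - Py) - (y1 - Py) * (x2 - Px) <> 0 ->
  slope_x i = slope_x j /\ slope_y i = slope_y j /\ rot_normal i = rot_normal j.
Proof.
  intros HPi HPj I1 I2 Hi1 Hj1 Hi2 Hj2 Hdet.
  destruct (lin_indep2_zero (slope_x i - slope_x j) (slope_y i - slope_y j)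
    (x1 - Px) (y1 - Py) (x2 - Px) (y2 - Py)) as [G1 G2]; auto.
  - pose proof (f_sub_p i x1 y1 HPi Hi1). pose proof (f_sub_p j x1 y1 HPj Hj1). lra.
  - pose proof (f_sub_p i x2 y2 HPi Hi2). pose proof (f_sub_p j x2 y2 HPj Hj2). lra.
  - assert (Hrot : vsub (rot i) (rot j) = vzero).
    { apply (cross_eq0_two_indep _ _ _ (rot_sub_parallel i j x1 y1 HPi HPj I1 Hi1 Hj1)
        (rot_sub_parallel i j x2 y2 HPi HPj I2 Hi2 Hj2)). exact Hdet. }
    pose proof (f_equal vx Hrot); pose proof (f_equal vy Hrot); pose proof (f_equal vz Hrot).
    cbn in *. unfold rot_normal.
    replace (slope_x i) with (slope_x j) by lra. replace (slope_y i) with (slope_y j) by lra.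
    replace (vx (rot i)) with (vx (rot j)) by lra. replace (vy (rot i)) with (vy (rot j)) by lra.
    replace (vz (rot i)) with (vz (rot j)) by lra. repeat split; lra.
Qed.

Lemma concave_slope_jump s0 i j x y u1 u2 eps : concave_on D (fun x y => s0 * f x y) ->
  in_proj (T i) Px Py -> in_proj (T j) Px Py -> in_proj (T i) x y -> in_proj (T j) x y ->
  0 < eps -> in_proj (T i) (x + eps * u1) (y + eps * u2) ->
  s0 * ((slope_x i - slope_x j) * u1 + (slope_y i - slope_y j) * u2) <= 0.
Proof.
  intros Hconc HPi HPj Hi Hj He Hi'.
  set (x' := x + eps * u1) in Hi'. set (y' := y + eps * u2) in Hi'.
  destruct (T_in_cap i _ (graph_in_T i x' y' Hi')) as [HD' _].
  pose proof (concave_le_tri_height s0 j x' y' Hconc HD') as Hc.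
  rewrite (tri_height_affine (T j) x' y' Px Py), <- (f_eq_tri_height j _ _ HPj) in Hc.
  pose proof (f_sub_p i x' y' HPi Hi') as Gi.
  pose proof (f_sub_p i x y HPi Hi) as G0i. pose proof (f_sub_p j x y HPj Hj) as G0j.
  unfold slope_x, slope_y in *.
  set (dx := tri_slope_x (T i) - tri_slope_x (T j)). set (dy := tri_slope_y (T i) - tri_slope_y (T j)).
  assert (Hdot : dx * (x - Px) + dy * (y - Py) = 0) by (unfold dx, dy; lra).
  assert (E : s0 * f x' y' -
              s0 * (f Px Py + (x' - Px) * tri_slope_x (T j) + (y' - Py) * tri_slope_y (T j)) =
              s0 * (dx * (x - Px) + dy * (y - Py)) + eps * (s0 * (dx * u1 + dy * u2))).
  { replace (f x' y') with
      (f Px Py + tri_slope_x (T i) * (x' - Px) + tri_slope_y (T i) * (y' - Py)) by lra.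
    unfold x', y', dx, dy. ring. }
  rewrite Hdot, Rmult_0_r, Rplus_0_l in E.
  apply (Rmult_le_reg_l eps); [exact He|]. lra.
Qed.

Section Sign.
Variable sg : R.
Hypothesis Hsg : forall q, incident_edge I T p q ->
  forall y, on_edge_minus_p p q y -> inC_int D f y -> sg * (vz (Z y) - vz (Z p)) > 0.

Lemma vert_var_edge_sign i q : in_proj (T i) Px Py -> is_vert (T i) p -> is_vert (T i) q -> q <> p ->
  sg * vert_var i (vx q) (vy q) > 0.
Proof.
  intros HP Vp Vq Hqp.
  destruct (interior2_open D Px Py p_interior) as (r0 & Hr0 & Hint).
  destruct (small_scale ((vx q - Px) ^ 2 + (vy q - Py) ^ 2) r0) as (tau & Htau & Hsmall);
    [pose proof (pdist2_nonneg (vx q) (vy q) Px Py) as h; exact h| exact Hr0|].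
  set (y := seg p q tau).
  assert (Hy : in_tri (T i) y) by (apply seg_in_tri; auto; lra).
  assert (HyC : inC_int D f y).
  { split; [| apply (T_in_cap i y Hy)]. apply Hint.
    unfold pdist2, y, seg, vadd, vscal, vsub; cbn [vx vy]. fold Px Py.
    replace ((Px + tau * (vx q - Px) - Px) ^ 2 + (Py + tau * (vy q - Py) - Py) ^ 2)
      with (tau * tau * ((vx q - Px) ^ 2 + (vy q - Py) ^ 2)) by ring. exact Hsmall. }
  pose proof (Hsg q (ex_intro _ i (conj Vp (conj Vq Hqp))) y (ex_intro _ tau (conj Htau eq_refl)) HyC)
    as Hpos.
  destruct Hdef as (_ & _ & HZ).
  rewrite (HZ i y Hy HyC), (Z_p i HP), kapp_vz_sub in Hpos.
  unfold vert_var, rot. unfold y, seg in Hpos; cbn in Hpos. fold Px Py in Hpos.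
  apply (Rmult_gt_reg_l tau); [lra|]. nra.
Qed.

(* vert_var i is linear in (x - Px, y - Py), and p is a vertex of T i. *)
Lemma vert_var_sign i x y : in_proj (T i) Px Py -> in_proj (T i) x y -> (x <> Px \/ y <> Py) ->
  sg * vert_var i x y > 0.
Proof.
  intros HP Hin Hne.
  destruct p_vertex_of_T as (j & Hj).
  pose proof (p_vert_of_in_T i j Hj (p_in_T i HP)) as Vp.
  destruct (in_tri_from_vertex _ _ _ (T_area i) Vp (graph_in_T i x y Hin))
    as (q1 & q2 & m1 & m2 & V1 & V2 & N1 & N2 & H1 & H2 & Ex & Ey).
  cbn in Ex, Ey. fold Px Py in Ex, Ey.
  pose proof (vert_var_edge_sign i q1 HP Vp V1 N1) as S1.
  pose proof (vert_var_edge_sign i q2 HP Vp V2 N2) as S2.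
  assert (E : vert_var i x y = m1 * vert_var i (vx q1) (vy q1) + m2 * vert_var i (vx q2) (vy q2)).
  { unfold vert_var. rewrite Ex, Ey. ring. }
  rewrite E.
  destruct (Rle_lt_or_eq_dec 0 m1 H1) as [P1|<-]; destruct (Rle_lt_or_eq_dec 0 m2 H2) as [P2|<-];
    [nra| nra| nra| exfalso; destruct Hne as [Hx|Hy]; [apply Hx| apply Hy]; lra].
Qed.

Lemma rot_normal_crossing s0 i j x y u1 u2 eps : (s0 = 1 \/ s0 = -1) ->
  concave_on D (fun x y => s0 * f x y) ->
  in_proj (T i) Px Py -> in_proj (T j) Px Py -> interior2 D x y ->
  in_proj (T i) x y -> in_proj (T j) x y ->
  (x <> Px \/ y <> Py) -> 0 < eps -> in_proj (T i) (x + eps * u1) (y + eps * u2) ->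
  (x - Px) * u2 - (y - Py) * u1 > 0 ->
  s0 * sg * (rot_normal i - rot_normal j) <= 0 /\
  ((slope_x i <> slope_x j \/ slope_y i <> slope_y j) -> s0 * sg * (rot_normal i - rot_normal j) < 0).
Proof.
  intros Hs0 Hconc HPi HPj Hint Hi Hj Hne He Hi' Hcr.
  pose proof (f_sub_p i x y HPi Hi) as Gi. pose proof (f_sub_p j x y HPj Hj) as Gj.
  pose proof (rot_sub_parallel i j x y HPi HPj Hint Hi Hj) as Hpar.
  rewrite <- p_graph in Hpar. unfold vsub in Hpar. cbn [vx vy vz] in Hpar.
  set (Ex := x - Px) in *. set (Ey := y - Py) in *. set (Ez := f x y - f Px Py) in *.
  assert (HE : Ex <> 0 \/ Ey <> 0) by (destruct Hne; [left| right]; unfold Ex, Ey; lra).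
  assert (HN : 0 < Ex * Ex + Ey * Ey) by (destruct HE; nra).
  assert (Hdot : (slope_x i - slope_x j) * Ex + (slope_y i - slope_y j) * Ey = 0) by lra.
  pose proof (rot_normal_jump Ex Ey Ez _ _ _ _ (rot i) (rot j) Gi Gj Hpar) as Jc.
  pose proof (slope_jump_along Ex Ey _ _ u1 u2 Hdot) as Js.
  pose proof (concave_slope_jump s0 i j x y u1 u2 eps Hconc HPi HPj Hi Hj He Hi') as Hs.
  pose proof (vert_var_sign j x y HPj Hj Hne) as Hv.
  destruct (jump_sign _ _ (rot_normal i - rot_normal j) _ (vert_var j x y) _ s0 sg HN Hcr
    ltac:(destruct Hs0; lra) Jc Js Hs Hv) as [Hle Hlt].
  split; [exact Hle|]. intros Hd. apply Hlt, (orth_cross_neq0 Ex Ey); auto.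
  destruct Hd; [left| right]; lra.
Qed.

Section Loop.
Variables (s0 r : R) (L : list I).
Hypothesis Hs0 : s0 = 1 \/ s0 = -1.
Hypothesis Hconc : concave_on D (fun x y => s0 * f x y).
Hypothesis Hr : 0 < r.
Hypothesis Hstar : star_disc r L.

Let rho := Rmin 1 (r / 4).
Let loop_x t := Px + rho * square_x t.
Let loop_y t := Py + rho * square_y t.

Lemma rho_pos : 0 < rho.
Proof. apply Rmin_glb_lt; lra. Qed.

Lemma loop_in_star t : 0 <= t <= 5 -> pdist2 (loop_x t) (loop_y t) Px Py < r.
Proof.
  intros Ht. unfold pdist2, loop_x, loop_y.
  replace ((Px + rho * square_x t - Px) ^ 2 + (Py + rho * square_y t - Py) ^ 2) with
    (rho * rho * (square_x t * square_x t + square_y t * square_y t)) by ring.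
  pose proof (square_norm_le t Ht). pose proof rho_pos.
  assert (rho <= r / 4) by apply Rmin_r. assert (rho <= 1) by apply Rmin_l.
  assert (rho * rho <= r / 4) by nra.
  assert (rho * rho * (square_x t * square_x t + square_y t * square_y t) <= rho * rho * 2)
    by (apply Rmult_le_compat_l; nra).
  lra.
Qed.

Lemma loop_interior t : 0 <= t <= 5 -> interior2 D (loop_x t) (loop_y t).
Proof. intros Ht. apply (Hstar _ _ (loop_in_star t Ht)). Qed.

Lemma loop_covered t : 0 <= t <= 5 ->
  exists i, In i L /\ in_proj (T i) Px Py /\ in_proj (T i) (loop_x t) (loop_y t).
Proof.
  intros Ht. destruct (Hstar _ _ (loop_in_star t Ht)) as (_ & (i & HiL & Hi) & Hall).
  exists i. split; auto. split; auto. apply (Hall i Hi).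
Qed.

Lemma loop_on_side k a1 u1 a2 u2 s : square_side k a1 u1 a2 u2 -> k <= s <= k + 1 ->
  loop_x s = (Px + rho * a1) + s * (rho * u1) /\ loop_y s = (Py + rho * a2) + s * (rho * u2).
Proof.
  intros (_ & _ & S) Hs. destruct (S s Hs) as [E1 E2].
  unfold loop_x, loop_y. rewrite E1, E2. split; ring.
Qed.

Lemma loop_covered_on_side k a1 u1 a2 u2 : square_side k a1 u1 a2 u2 ->
  forall s, k < s < k + 1 -> exists i, In i L /\ in_proj (T i) Px Py /\
    in_proj (T i) ((Px + rho * a1) + s * (rho * u1)) ((Py + rho * a2) + s * (rho * u2)).
Proof.
  intros Hk s Hs. pose proof (square_side_range _ _ _ _ _ Hk).
  destruct (loop_covered s ltac:(lra)) as (i & HiL & HP & Hi).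
  destruct (loop_on_side k a1 u1 a2 u2 s Hk ltac:(lra)) as [E1 E2].
  exists i. rewrite <- E1, <- E2. auto.
Qed.

Definition follows_right i t d := in_proj (T i) Px Py /\ 0 < d /\
  exists k a1 u1 a2 u2, square_side k a1 u1 a2 u2 /\ k <= t /\ t + d <= k + 1 /\
    forall s, t <= s <= t + d -> in_proj (T i) (loop_x s) (loop_y s).

Lemma loop_follows_right t : 0 <= t < 5 -> exists i d, follows_right i t d.
Proof.
  intros Ht. destruct (square_side_right t Ht) as (k & a1 & u1 & a2 & u2 & Hk & Hkt).
  destruct (line_in_T_right L (fun i => in_proj (T i) Px Py) (Px + rho * a1) (Py + rho * a2)
    (rho * u1) (rho * u2) t (k + 1)) as (i & d0 & HQ & Hd0 & Hi); [lra| |].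
  { intros s Hs. apply (loop_covered_on_side k a1 u1 a2 u2 Hk). lra. }
  exists i, (Rmin d0 (k + 1 - t)).
  pose proof (Rmin_l d0 (k + 1 - t)); pose proof (Rmin_r d0 (k + 1 - t)).
  split; [exact HQ| split; [apply Rmin_glb_lt; lra|]].
  exists k, a1, u1, a2, u2. split; [exact Hk| split; [lra| split; [lra|]]].
  intros s Hs. destruct (loop_on_side k a1 u1 a2 u2 s Hk ltac:(lra)) as [-> ->]. apply Hi. lra.
Qed.

Lemma loop_follows_left t : 0 < t <= 5 -> exists j d, in_proj (T j) Px Py /\ 0 < d /\
  exists k a1 u1 a2 u2, square_side k a1 u1 a2 u2 /\ k <= t - d /\ t <= k + 1 /\
    forall s, t - d <= s <= t -> in_proj (T j) (loop_x s) (loop_y s).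
Proof.
  intros Ht. destruct (square_side_left t Ht) as (k & a1 & u1 & a2 & u2 & Hk & Hkt).
  destruct (line_in_T_left L (fun i => in_proj (T i) Px Py) (Px + rho * a1) (Py + rho * a2)
    (rho * u1) (rho * u2) k t) as (j & d0 & HQ & Hd0 & Hj); [lra| |].
  { intros s Hs. apply (loop_covered_on_side k a1 u1 a2 u2 Hk). lra. }
  exists j, (Rmin d0 (t - k)). pose proof (Rmin_l d0 (t - k)); pose proof (Rmin_r d0 (t - k)).
  split; [exact HQ| split; [apply Rmin_glb_lt; lra|]].
  exists k, a1, u1, a2, u2. split; [exact Hk| split; [lra| split; [lra|]]].
  intros s Hs. destruct (loop_on_side k a1 u1 a2 u2 s Hk ltac:(lra)) as [-> ->]. apply Hj. lra.
Qed.

Lemma loop_same_data i j k a1 u1 a2 u2 s s' : square_side k a1 u1 a2 u2 ->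
  k <= s -> s < s' -> s' <= k + 1 ->
  in_proj (T i) Px Py -> in_proj (T j) Px Py ->
  in_proj (T i) (loop_x s) (loop_y s) -> in_proj (T i) (loop_x s') (loop_y s') ->
  in_proj (T j) (loop_x s) (loop_y s) -> in_proj (T j) (loop_x s') (loop_y s') ->
  slope_x i = slope_x j /\ slope_y i = slope_y j /\ rot_normal i = rot_normal j.
Proof.
  intros Hk H1 H2 H3 HPi HPj Hi1 Hi2 Hj1 Hj2. pose proof (square_side_range _ _ _ _ _ Hk).
  apply (same_data_of_two_points i j (loop_x s) (loop_y s) (loop_x s') (loop_y s'));
    auto; try (apply loop_interior; lra).
  unfold loop_x, loop_y.
  replace ((Px + rho * square_x s - Px) * (Py + rho * square_y s' - Py) -
           (Py + rho * square_y s - Py) * (Px + rho * square_x s' - Px))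
    with (rho * rho * (square_x s * square_y s' - square_y s * square_x s')) by ring.
  rewrite (square_side_cross k a1 u1 a2 u2 s s' Hk ltac:(lra) ltac:(lra)).
  pose proof rho_pos. assert (0 < rho * rho) by nra. nra.
Qed.

Lemma loop_choice : exists iR : R -> I, forall t, 0 <= t < 5 -> exists d, follows_right (iR t) t d.
Proof.
  destruct (loop_covered 0 ltac:(lra)) as (i0 & _).
  apply (choice (fun t i => 0 <= t < 5 -> exists d, follows_right i t d)). intros t.
  destruct (classic (0 <= t < 5)) as [Ht|Ht]; [|exists i0; tauto].
  destruct (loop_follows_right t Ht) as (i & d & H). exists i. eauto.
Qed.

Variable iR : R -> I.
Hypothesis HiR : forall t, 0 <= t < 5 -> exists d, follows_right (iR t) t d.

Lemma data_right_const t : 0 <= t < 4 -> exists d, 0 < d /\ forall s, t < s < t + d -> s <= 4 ->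
  slope_x (iR s) = slope_x (iR t) /\ slope_y (iR s) = slope_y (iR t) /\
  rot_normal (iR s) = rot_normal (iR t).
Proof.
  intros Ht.
  destruct (HiR t ltac:(lra)) as (d & HPt & Hd & k & a1 & u1 & a2 & u2 & Hk & Hkt & Htd & Hin_t).
  exists d; split; auto. intros s Hs Hs4.
  destruct (HiR s ltac:(lra)) as (d' & HPs & Hd' & _ & _ & _ & _ & _ & _ & _ & _ & Hin_s).
  set (s' := s + Rmin d' (t + d - s)).
  pose proof (Rmin_l d' (t + d - s)); pose proof (Rmin_r d' (t + d - s)).
  assert (0 < Rmin d' (t + d - s)) by (apply Rmin_glb_lt; lra).
  apply (loop_same_data (iR s) (iR t) k a1 u1 a2 u2 s s' Hk); auto; try (unfold s'; lra);
    [apply Hin_s| apply Hin_s| apply Hin_t| apply Hin_t]; unfold s'; lra.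
Qed.

Lemma loop_crossing t j : 0 < t <= 4 -> in_proj (T j) Px Py -> in_proj (T j) (loop_x t) (loop_y t) ->
  s0 * sg * (rot_normal (iR t) - rot_normal j) <= 0 /\
  ((slope_x (iR t) <> slope_x j \/ slope_y (iR t) <> slope_y j) ->
   s0 * sg * (rot_normal (iR t) - rot_normal j) < 0).
Proof.
  intros Ht HPj Hj.
  destruct (HiR t ltac:(lra)) as (d & HPt & Hd & k & a1 & u1 & a2 & u2 & Hk & Hkt & Htd & Hin_t).
  pose proof (square_side_range _ _ _ _ _ Hk). pose proof rho_pos.
  destruct (loop_on_side k a1 u1 a2 u2 t Hk ltac:(lra)) as [Et1 Et2].
  destruct (loop_on_side k a1 u1 a2 u2 (t + d) Hk ltac:(lra)) as [Ed1 Ed2].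
  pose proof (square_side_turn k a1 u1 a2 u2 t Hk ltac:(lra)) as Hturn.
  apply (rot_normal_crossing s0 (iR t) j (loop_x t) (loop_y t) (rho * u1) (rho * u2) d); auto.
  - apply loop_interior; lra.
  - apply Hin_t; lra.
  - unfold loop_x, loop_y. destruct (Req_dec (square_x t) 0) as [h|h]; [right| left]; intros E.
    + assert (h' : square_y t = 0) by (apply (Rmult_eq_reg_l rho); lra).
      rewrite h, h' in Hturn. lra.
    + apply h, (Rmult_eq_reg_l rho); lra.
  - replace (loop_x t + d * (rho * u1)) with (loop_x (t + d)) by (rewrite Ed1, Et1; ring).
    replace (loop_y t + d * (rho * u2)) with (loop_y (t + d)) by (rewrite Ed2, Et2; ring).
    apply Hin_t; lra.
  - unfold loop_x, loop_y.
    replace ((Px + rho * square_x t - Px) * (rho * u2) - (Py + rho * square_y t - Py) * (rho * u1))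
      with (rho * rho * (square_x t * u2 - square_y t * u1)) by ring.
    rewrite Hturn. nra.
Qed.

Lemma data_left_jump t : 0 < t <= 4 -> exists d j, 0 < d /\
  (forall s, t - d < s < t -> 0 <= s -> slope_x (iR s) = slope_x j /\ slope_y (iR s) = slope_y j /\
     rot_normal (iR s) = rot_normal j) /\
  s0 * sg * (rot_normal (iR t) - rot_normal j) <= 0 /\
  ((slope_x (iR t) <> slope_x j \/ slope_y (iR t) <> slope_y j) ->
   s0 * sg * (rot_normal (iR t) - rot_normal j) < 0).
Proof.
  intros Ht.
  destruct (loop_follows_left t ltac:(lra))
    as (j & d & HPj & Hd & k & a1 & u1 & a2 & u2 & Hk & Hkt & Htk & Hin_j).
  exists d, j. split; auto. split; [|apply loop_crossing; auto; apply Hin_j; lra].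
  intros s Hs Hs0'.
  destruct (HiR s ltac:(lra)) as (d' & HPs & Hd' & _ & _ & _ & _ & _ & _ & _ & _ & Hin_s).
  set (s' := s + Rmin d' (t - s)).
  pose proof (Rmin_l d' (t - s)); pose proof (Rmin_r d' (t - s)).
  assert (0 < Rmin d' (t - s)) by (apply Rmin_glb_lt; lra).
  apply (loop_same_data (iR s) j k a1 u1 a2 u2 s s' Hk); auto; try (unfold s'; lra);
    [apply Hin_s| apply Hin_s| apply Hin_j| apply Hin_j]; unfold s'; lra.
Qed.

Lemma data_periodic : rot_normal (iR 4) = rot_normal (iR 0).
Proof.
  destruct (HiR 0 ltac:(lra)) as (d0 & HP0 & Hd0 & _ & _ & _ & _ & _ & _ & _ & _ & Hin0).
  destruct (HiR 4 ltac:(lra)) as (d4 & HP4 & Hd4 & k4 & a1 & u1 & a2 & u2 & Hk4 & _ & Htd4 & Hin4).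
  pose proof (square_side_range _ _ _ _ _ Hk4).
  set (m := Rmin d0 d4).
  assert (m <= d0) by apply Rmin_l. assert (m <= d4) by apply Rmin_r.
  assert (0 < m) by (apply Rmin_glb_lt; lra).
  assert (W : forall s, 0 <= s <= 1 -> loop_x (s + 4) = loop_x s /\ loop_y (s + 4) = loop_y s).
  { intros s Hs. destruct (square_periodic s Hs) as [A B]. unfold loop_x, loop_y. rewrite A, B. auto. }
  destruct (W 0 ltac:(lra)) as [W01 W02]. destruct (W m ltac:(lra)) as [Wm1 Wm2].
  rewrite Rplus_0_l in W01, W02.
  assert (in_proj (T (iR 4)) (loop_x 0) (loop_y 0)) by (rewrite <- W01, <- W02; apply Hin4; lra).
  assert (in_proj (T (iR 4)) (loop_x m) (loop_y m)) by (rewrite <- Wm1, <- Wm2; apply Hin4; lra).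
  destruct (loop_same_data (iR 4) (iR 0) 0 1 0 (-1) 2 0 m square_side0) as (_ & _ & E); auto; try lra;
    apply Hin0; lra.
Qed.

Lemma slopes_const : forall t, 0 <= t <= 4 ->
  (slope_x (iR t), slope_y (iR t)) = (slope_x (iR 0), slope_y (iR 0)).
Proof.
  apply (constant_of_nonincreasing_jumps (fun t => (slope_x (iR t), slope_y (iR t)))
    (fun t => s0 * sg * rot_normal (iR t)) 0 4).
  - intros t Ht. destruct (data_right_const t Ht) as (d & Hd & H). exists d; split; auto.
    intros s Hs Hs4. destruct (H s Hs Hs4) as (-> & -> & ->). auto.
  - intros t Ht. destruct (data_left_jump t Ht) as (d & j & Hd & H & Hle & Hlt).
    exists d, (slope_x j, slope_y j), (s0 * sg * rot_normal j). split; auto. split.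
    + intros s Hs Hs0'. destruct (H s Hs Hs0') as (-> & -> & ->). auto.
    + split; [lra|]. intros Hne.
      assert (Hd' : slope_x (iR t) <> slope_x j \/ slope_y (iR t) <> slope_y j)
        by (apply NNPP; intros Hn; apply Hne; f_equal; apply NNPP; tauto).
      specialize (Hlt Hd'). lra.
  - cbn beta. rewrite data_periodic. reflexivity.
Qed.

(* The slopes agree on every sector around p: f is affine on the disc of radius rho. *)
Lemma loop_contra : False.
Proof.
  pose proof rho_pos.
  apply (not_affine_near_p (rho * rho) (slope_x (iR 0)) (slope_y (iR 0))); [nra|].
  intros x y Hxy.
  destruct (classic (x = Px /\ y = Py)) as [[-> ->]|Hne]; [ring|].
  destruct (square_polar (x - Px) (y - Py)) as (t & m & Ht & Hm & Hmm & Ex & Ey).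
  { destruct (Req_dec x Px); [right| left]; intros E; apply Hne; split; lra. }
  assert (Hmr : m < rho) by (unfold pdist2 in Hxy; nra).
  destruct (HiR t ltac:(lra)) as (d & HPt & Hd & _ & _ & _ & _ & _ & _ & _ & _ & Hin_t).
  set (th := m / rho).
  assert (Hth : 0 <= th <= 1).
  { unfold th. split; [apply Rlt_le, Rdiv_lt_0_compat; lra|].
    apply (Rmult_le_reg_r rho); auto.
    unfold Rdiv. rewrite Rmult_assoc, Rinv_l, Rmult_1_l, Rmult_1_r; lra. }
  assert (Hxy' : in_proj (T (iR t)) x y).
  { replace x with ((1 - th) * Px + th * loop_x t)
      by (unfold th, loop_x; replace x with (Px + m * square_x t) by lra; field; lra).
    replace y with ((1 - th) * Py + th * loop_y t)
      by (unfold th, loop_y; replace y with (Py + m * square_y t) by lra; field; lra).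
    apply in_proj_convex; auto; [apply T_area| apply Hin_t; lra]. }
  pose proof (f_sub_p (iR t) x y HPt Hxy') as G.
  pose proof (slopes_const t Ht) as Hc. injection Hc as Hcx Hcy.
  rewrite Hcx, Hcy in G. lra.
Qed.
End Loop.

Lemma no_uniform_sign : False.
Proof.
  destruct Hcap as (_ & _ & _ & _ & _ & _ & s0 & Hs0 & Hconc & _).
  destruct star_disc_exists as (r & L & Hr & Hstar).
  destruct (loop_choice s0 r L Hs0 Hr Hstar) as (iR & HiR).
  exact (loop_contra s0 r L Hs0 Hconc Hr Hstar iR HiR).
Qed.
End Sign.
End Cap.

Theorem proposition2 (D : R -> R -> Prop) (f : R -> R -> R) (I : Type)
    (T : I -> tri) (K : I -> killing) (Z : vec -> vec) (p : vec) :
  polyhedral_convex_cap D f ->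
  inf_isometric_deformation D f I T K Z ->
  is_vertexC D f p ->
  (forall q, incident_edge I T p q ->
     (forall y, on_edge_minus_p p q y -> inC_int D f y -> vz (Z y) - vz (Z p) > 0) \/
     (forall y, on_edge_minus_p p q y -> inC_int D f y -> vz (Z y) - vz (Z p) < 0) \/
     (forall y, on_edge_minus_p p q y -> inC_int D f y -> vz (Z y) - vz (Z p) = 0)) ->
  ~ (forall q, incident_edge I T p q ->
       forall y, on_edge_minus_p p q y -> inC_int D f y -> vz (Z y) - vz (Z p) > 0) /\
  ~ (forall q, incident_edge I T p q ->
       forall y, on_edge_minus_p p q y -> inC_int D f y -> vz (Z y) - vz (Z p) < 0).
Proof.
  intros Hcap Hdef Hvert _.
  split; intros Hsign.
  - apply (no_uniform_sign D f I T K Z p Hcap Hdef Hvert 1).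
    intros q Hq y Hy HyC. specialize (Hsign q Hq y Hy HyC). lra.
  - apply (no_uniform_sign D f I T K Z p Hcap Hdef Hvert (-1)).
    intros q Hq y Hy HyC. specialize (Hsign q Hq y Hy HyC). lra.
Qed.
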